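(* There is a computable equivalence structure that is computably bi-embeddably categorical but not computably categorical.
   Context: An equivalence structure $\mathcal{A}=(A,E)$ has universe $A\subseteq\omega$ and an equivalence relation $E$ on $A$; it is computable if its atomic diagram is computable. Two structures are bi-embeddable if each embeds into the other. A computable structure $\mathcal{A}$ is computably bi-embeddably categorical if every computable structure bi-embeddable with $\mathcal{A}$ is bi-embeddable with $\mathcal{A}$ via computable embeddings in both directions. A computable structure $\mathcal{A}$ is computably categorical if for every computable structure $\mathcal{B}$ isomorphic to $\mathcal{A}$ there is a computable isomorphism from $\mathcal{B}$ to $\mathcal{A}$. *)

From Stdlib Require Import List Arith.
Import ListNotations.

Inductive prog : Type :=
| PZero : prog
| PSucc : prog
| PProj : nat -> prog
| PComp : prog -> list prog -> prog
| PPrim : prog -> prog -> prog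
| PMu   : prog -> prog.

Inductive eval : prog -> list nat -> nat -> Prop :=
| ev_zero xs : eval PZero xs 0
| ev_succ x xs : eval PSucc (x :: xs) (S x)
| ev_proj i xs y : nth_error xs i = Some y -> eval (PProj i) xs y
| ev_comp f gs xs ys y :
    evals gs xs ys -> eval f ys y -> eval (PComp f gs) xs y
| ev_prim0 f g xs y : eval f xs y -> eval (PPrim f g) (0 :: xs) y
| ev_primS f g n xs r y :
    eval (PPrim f g) (n :: xs) r -> eval g (n :: r :: xs) y ->
    eval (PPrim f g) (S n :: xs) y
| ev_mu f xs n :
    eval f (n :: xs) 0 ->
    (forall m, m < n -> exists k, eval f (m :: xs) (S k)) ->
    eval (PMu f) xs n
with evals : list prog -> list nat -> list nat -> Prop :=
| evs_nil xs : evals [] xs []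
| evs_cons g gs xs y ys :
    eval g xs y -> evals gs xs ys -> evals (g :: gs) xs (y :: ys).

Definition computable_fun (f : nat -> nat) : Prop :=
  exists p, forall x, eval p [x] (f x).

Definition computable_set (A : nat -> Prop) : Prop :=
  exists p, forall x, (A x -> eval p [x] 1) /\ (~ A x -> eval p [x] 0).

Definition computable_rel (R : nat -> nat -> Prop) : Prop :=
  exists p, forall x y, (R x y -> eval p [x; y] 1) /\ (~ R x y -> eval p [x; y] 0).

Record structure : Type := mkStructure {
  univ : nat -> Prop;
  E : nat -> nat -> Prop;
  E_in_univ : forall x y, E x y -> univ x /\ univ y
}.

Definition is_equivalence_structure (S : structure) : Prop :=
  (forall x, univ S x -> E S x x) /\
  (forall x y, E S x y -> E S y x) /\
  (forall x y z, E S x y -> E S y z -> E S x z).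

(** Computable structure: its atomic diagram (universe, equality, E) is
    computable; equality on nat is always decidable. *)
Definition computable_structure (S : structure) : Prop :=
  computable_set (univ S) /\ computable_rel (E S).

(** Embedding of S into T (maps outside the universe of S are irrelevant). *)
Definition embedding (S T : structure) (f : nat -> nat) : Prop :=
  (forall x, univ S x -> univ T (f x)) /\
  (forall x y, univ S x -> univ S y -> f x = f y -> x = y) /\
  (forall x y, univ S x -> univ S y -> (E S x y <-> E T (f x) (f y))).

Definition isomorphism (S T : structure) (f : nat -> nat) : Prop :=
  embedding S T f /\ (forall y, univ T y -> exists x, univ S x /\ f x = y).

Definition embeds (S T : structure) : Prop := exists f, embedding S T f.
Definition computably_embeds (S T : structure) : Prop :=
  exists f, computable_fun f /\ embedding S T f.

Definition bi_embeddable (S T : structure) : Prop := embeds S T /\ embeds T S.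
Definition isomorphic (S T : structure) : Prop := exists f, isomorphism S T f.

Definition computably_bi_embeddably_categorical (A : structure) : Prop :=
  computable_structure A /\
  forall B, computable_structure B -> bi_embeddable A B ->
    computably_embeds A B /\ computably_embeds B A.

Definition computably_categorical (A : structure) : Prop :=
  computable_structure A /\
  forall B, computable_structure B -> isomorphic B A ->
    exists f, computable_fun f /\ isomorphism B A f.

From Stdlib Require Import List Arith Lia Cantor ClassicalEpsilon Classical Wf_nat.
From Stdlib Require FinFun.
Import ListNotations.

(* The witness is the equivalence structure A with infinitely many classes of size one and
   infinitely many of size two.

   A is not computably categorical: a computable copy of A can make the class of 5e+3 a pair
   exactly when program e halts on its own code, by joining it to an element indexed by the
   least halting certificate (a checkable coded derivation of [eval]).  A computable
   isomorphism onto A would then decide non-halting, which the diagonal program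
   "search for a zero of q(x)" rules out.

   A is computably bi-embeddably categorical: if a computable B is bi-embeddable with A, the
   embedding into A bounds the classes of B by two and the embedding of A gives B infinitely
   many pairs.  Then x |-> 3x, or 3m+1 for the least partner m < x, embeds B into A, and
   listing the larger elements of the pairs of B in increasing order (a mu-search) embeds A
   into B; both maps only query E_B. *)

(** * Evaluation *)

Section EvalInduction.
Variable P : prog -> list nat -> nat -> Prop.
Variable Q : list prog -> list nat -> list nat -> Prop.
Hypothesis Hzero : forall xs, P PZero xs 0.
Hypothesis Hsucc : forall x xs, P PSucc (x :: xs) (S x).
Hypothesis Hproj : forall i xs y, nth_error xs i = Some y -> P (PProj i) xs y.
Hypothesis Hcomp : forall f gs xs ys y,
  evals gs xs ys -> Q gs xs ys -> eval f ys y -> P f ys y -> P (PComp f gs) xs y.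
Hypothesis Hprim0 : forall f g xs y, eval f xs y -> P f xs y -> P (PPrim f g) (0 :: xs) y.
Hypothesis HprimS : forall f g n xs r y,
  eval (PPrim f g) (n :: xs) r -> P (PPrim f g) (n :: xs) r ->
  eval g (n :: r :: xs) y -> P g (n :: r :: xs) y -> P (PPrim f g) (S n :: xs) y.
Hypothesis Hmu : forall f xs n, eval f (n :: xs) 0 -> P f (n :: xs) 0 ->
  (forall m, m < n -> exists k, eval f (m :: xs) (S k) /\ P f (m :: xs) (S k)) ->
  P (PMu f) xs n.
Hypothesis Hnil : forall xs, Q [] xs [].
Hypothesis Hcons : forall g gs xs y ys,
  eval g xs y -> P g xs y -> evals gs xs ys -> Q gs xs ys -> Q (g :: gs) xs (y :: ys).

(* Hand-written because the induction hypothesis of the [PMu] case sits under an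
   existential, which [Scheme] does not provide. *)
Fixpoint eval_evals_ind p xs y (H : eval p xs y) {struct H} : P p xs y :=
  match H in eval p xs y return P p xs y with
  | ev_zero xs => Hzero xs
  | ev_succ x xs => Hsucc x xs
  | ev_proj i xs y e => Hproj i xs y e
  | ev_comp f gs xs ys y H1 H2 =>
      Hcomp f gs xs ys y H1 (evals_eval_ind _ _ _ H1) H2 (eval_evals_ind _ _ _ H2)
  | ev_prim0 f g xs y H1 => Hprim0 f g xs y H1 (eval_evals_ind _ _ _ H1)
  | ev_primS f g n xs r y H1 H2 =>
      HprimS f g n xs r y H1 (eval_evals_ind _ _ _ H1) H2 (eval_evals_ind _ _ _ H2)
  | ev_mu f xs n H0 Hl => Hmu f xs n H0 (eval_evals_ind _ _ _ H0)
      (fun m Hm => match Hl m Hm with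
                   | ex_intro _ k Hk => ex_intro _ k (conj Hk (eval_evals_ind _ _ _ Hk))
                   end)
  end
with evals_eval_ind gs xs ys (H : evals gs xs ys) {struct H} : Q gs xs ys :=
  match H in evals gs xs ys return Q gs xs ys with
  | evs_nil xs => Hnil xs
  | evs_cons g gs xs y ys H1 H2 =>
      Hcons g gs xs y ys H1 (eval_evals_ind _ _ _ H1) H2 (evals_eval_ind _ _ _ H2)
  end.

End EvalInduction.

Lemma eval_det p xs y : eval p xs y -> forall y', eval p xs y' -> y = y'.
Proof.
  revert p xs y.
  apply (eval_evals_ind (fun p xs y => forall y', eval p xs y' -> y = y')
                        (fun gs xs ys => forall ys', evals gs xs ys' -> ys = ys')).
  - now inversion 1.
  - now inversion 1.
  - intros i xs y e y' H; inversion H; congruence.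
  - intros f gs xs ys y _ IHgs _ IHf y' H; inversion H; subst.
    apply IHf; erewrite IHgs; eauto.
  - intros f g xs y _ IH y' H; inversion H; subst; auto.
  - intros f g n xs r y _ IHr _ IHg y' H; inversion H; subst.
    apply IHg; erewrite IHr; eauto.
  - intros f xs n _ IH0 IHlt y' H; inversion H as [| | | | | |f' xs' n' H0 Hlt]; subst.
    destruct (Nat.lt_trichotomy n y') as [Hl|[Hl|Hl]]; auto.
    + destruct (Hlt n Hl) as [k Hk]; discriminate (IH0 _ Hk).
    + destruct (IHlt y' Hl) as [k [_ Hk]]; discriminate (Hk _ H0).
  - now inversion 1.
  - intros g gs xs y ys _ IHg _ IHgs ys' H; inversion H; subst; f_equal; auto.
Qed.

(** * Mu-recursive functions of lists of arguments *)

Definition mu_rec (k : nat) (f : list nat -> nat) : Prop :=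
  exists p, forall xs, length xs = k -> eval p xs (f xs).

Lemma mu_rec_ext k f g :
  mu_rec k f -> (forall xs, length xs = k -> f xs = g xs) -> mu_rec k g.
Proof. intros [p Hp] H; exists p; intros xs Hx; rewrite <- H; auto. Qed.

Lemma mu_rec_comp k m F gs :
  mu_rec m F -> Forall (mu_rec k) gs -> length gs = m ->
  mu_rec k (fun xs => F (map (fun g => g xs) gs)).
Proof.
  intros [p Hp] Hgs <-.
  assert (Hps : exists ps, forall xs, length xs = k -> evals ps xs (map (fun g => g xs) gs)).
  { clear Hp; induction Hgs as [|g gs [q Hq] _ [ps Hps]]; [exists []; constructor|].
    exists (q :: ps); constructor; auto. }
  destruct Hps as [ps Hps]; exists (PComp p ps); intros xs Hx.
  econstructor; [now apply Hps|]; apply Hp; now rewrite length_map.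
Qed.

Lemma mu_rec_comp1 k F G1 :
  mu_rec 1 (fun ys => F (nth 0 ys 0)) -> mu_rec k G1 -> mu_rec k (fun xs => F (G1 xs)).
Proof. intros HF H1; exact (mu_rec_comp k 1 _ [G1] HF ltac:(repeat constructor; assumption) eq_refl). Qed.

Lemma mu_rec_comp2 k F G1 G2 :
  mu_rec 2 (fun ys => F (nth 0 ys 0) (nth 1 ys 0)) -> mu_rec k G1 -> mu_rec k G2 ->
  mu_rec k (fun xs => F (G1 xs) (G2 xs)).
Proof. intros HF H1 H2; exact (mu_rec_comp k 2 _ [G1; G2] HF ltac:(repeat constructor; assumption) eq_refl). Qed.

Lemma mu_rec_comp3 k F G1 G2 G3 :
  mu_rec 3 (fun ys => F (nth 0 ys 0) (nth 1 ys 0) (nth 2 ys 0)) ->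
  mu_rec k G1 -> mu_rec k G2 -> mu_rec k G3 ->
  mu_rec k (fun xs => F (G1 xs) (G2 xs) (G3 xs)).
Proof. intros HF H1 H2 H3; exact (mu_rec_comp k 3 _ [G1; G2; G3] HF ltac:(repeat constructor; assumption) eq_refl). Qed.

Lemma mu_rec_comp4 k F G1 G2 G3 G4 :
  mu_rec 4 (fun ys => F (nth 0 ys 0) (nth 1 ys 0) (nth 2 ys 0) (nth 3 ys 0)) ->
  mu_rec k G1 -> mu_rec k G2 -> mu_rec k G3 -> mu_rec k G4 ->
  mu_rec k (fun xs => F (G1 xs) (G2 xs) (G3 xs) (G4 xs)).
Proof.
  intros HF H1 H2 H3 H4; exact (mu_rec_comp k 4 _ [G1; G2; G3; G4] HF ltac:(repeat constructor; assumption) eq_refl).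
Qed.

Lemma mu_rec_comp5 k F G1 G2 G3 G4 G5 :
  mu_rec 5 (fun ys => F (nth 0 ys 0) (nth 1 ys 0) (nth 2 ys 0) (nth 3 ys 0) (nth 4 ys 0)) ->
  mu_rec k G1 -> mu_rec k G2 -> mu_rec k G3 -> mu_rec k G4 -> mu_rec k G5 ->
  mu_rec k (fun xs => F (G1 xs) (G2 xs) (G3 xs) (G4 xs) (G5 xs)).
Proof.
  intros HF H1 H2 H3 H4 H5.
  exact (mu_rec_comp k 5 _ [G1; G2; G3; G4; G5] HF ltac:(repeat constructor; assumption) eq_refl).
Qed.

Lemma mu_rec_comp6 k F G1 G2 G3 G4 G5 G6 :
  mu_rec 6 (fun ys => F (nth 0 ys 0) (nth 1 ys 0) (nth 2 ys 0) (nth 3 ys 0) (nth 4 ys 0)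
                         (nth 5 ys 0)) ->
  mu_rec k G1 -> mu_rec k G2 -> mu_rec k G3 -> mu_rec k G4 -> mu_rec k G5 -> mu_rec k G6 ->
  mu_rec k (fun xs => F (G1 xs) (G2 xs) (G3 xs) (G4 xs) (G5 xs) (G6 xs)).
Proof.
  intros HF H1 H2 H3 H4 H5 H6.
  exact (mu_rec_comp k 6 _ [G1; G2; G3; G4; G5; G6] HF ltac:(repeat constructor; assumption) eq_refl).
Qed.

Lemma mu_rec_zero k : mu_rec k (fun _ => 0).
Proof. exists PZero; constructor. Qed.

Lemma mu_rec_proj k i : i < k -> mu_rec k (fun xs => nth i xs 0).
Proof. exists (PProj i); constructor; apply nth_error_nth'; lia. Qed.

Lemma mu_rec_proj_tl k i : S i < k -> mu_rec k (fun xs => nth i (tl xs) 0).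
Proof.
  intros Hi; apply mu_rec_ext with (fun xs => nth (S i) xs 0); [now apply mu_rec_proj|].
  intros [|x xs] _; [destruct i|]; reflexivity.
Qed.

Lemma mu_rec_proj_tl2 k i : S (S i) < k -> mu_rec k (fun xs => nth i (tl (tl xs)) 0).
Proof.
  intros Hi; apply mu_rec_ext with (fun xs => nth (S i) (tl xs) 0); [now apply mu_rec_proj_tl|].
  intros [|x [|y xs]] _; [destruct i..|]; reflexivity.
Qed.

Lemma mu_rec_succ k G : mu_rec k G -> mu_rec k (fun xs => S (G xs)).
Proof.
  intros HG; apply (mu_rec_comp1 k S); auto.
  exists PSucc; intros [|x [|]] Hx; try discriminate; constructor.
Qed.

Lemma mu_rec_const k c : mu_rec k (fun _ => c).
Proof. induction c; [apply mu_rec_zero|now apply mu_rec_succ]. Qed.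

Lemma mu_rec_prim k f g h :
  mu_rec k f -> mu_rec (S (S k)) g ->
  (forall xs, length xs = k -> h (0 :: xs) = f xs) ->
  (forall n xs, length xs = k -> h (S n :: xs) = g (n :: h (n :: xs) :: xs)) ->
  mu_rec (S k) h.
Proof.
  intros [pf Hf] [pg Hg] H0 HS; exists (PPrim pf pg).
  intros [|n xs] Hx; [discriminate|]; injection Hx as Hx.
  induction n.
  - rewrite H0 by auto; constructor; auto.
  - rewrite HS by auto; econstructor; eauto; apply Hg; simpl; auto.
Qed.

Lemma mu_rec_mu k f m :
  mu_rec (S k) f ->
  (forall xs, length xs = k -> f (m xs :: xs) = 0 /\ forall j, j < m xs -> f (j :: xs) <> 0) ->
  mu_rec k m.
Proof.
  intros [pf Hf] H; exists (PMu pf); intros xs Hx; destruct (H xs Hx) as [H0 Hlt].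
  constructor.
  - rewrite <- H0; apply Hf; simpl; auto.
  - intros j Hj; specialize (Hlt j Hj); destruct (f (j :: xs)) as [|k'] eqn:Ej; [congruence|].
    exists k'; rewrite <- Ej; apply Hf; simpl; auto.
Qed.

Lemma mu_rec_pred : mu_rec 1 (fun ys => Nat.pred (nth 0 ys 0)).
Proof.
  apply (mu_rec_prim 0 (fun _ => 0) (fun ys => nth 0 ys 0)).
  - apply mu_rec_zero.
  - apply mu_rec_proj; lia.
  - reflexivity.
  - reflexivity.
Qed.

Lemma mu_rec_add : mu_rec 2 (fun ys => nth 0 ys 0 + nth 1 ys 0).
Proof.
  apply (mu_rec_prim 1 (fun ys => nth 0 ys 0) (fun ys => S (nth 1 ys 0))).
  - apply mu_rec_proj; lia.
  - apply mu_rec_succ, mu_rec_proj; lia.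
  - reflexivity.
  - reflexivity.
Qed.

Lemma mu_rec_mul : mu_rec 2 (fun ys => nth 0 ys 0 * nth 1 ys 0).
Proof.
  apply (mu_rec_prim 1 (fun _ => 0) (fun ys => nth 2 ys 0 + nth 1 ys 0)).
  - apply mu_rec_zero.
  - apply (mu_rec_comp2 3 Nat.add); [apply mu_rec_add|apply mu_rec_proj; lia..].
  - reflexivity.
  - intros; simpl; lia.
Qed.

Lemma mu_rec_sub : mu_rec 2 (fun ys => nth 0 ys 0 - nth 1 ys 0).
Proof.
  assert (Hsubr : mu_rec 2 (fun ys => nth 1 ys 0 - nth 0 ys 0)).
  { apply (mu_rec_prim 1 (fun ys => nth 0 ys 0) (fun ys => Nat.pred (nth 1 ys 0))).
    - apply mu_rec_proj; lia.
    - apply (mu_rec_comp1 3 Nat.pred); [apply mu_rec_pred|apply mu_rec_proj; lia].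
    - intros; simpl; lia.
    - intros; simpl; lia. }
  apply (mu_rec_comp2 2 (fun a b => b - a)); [exact Hsubr|apply mu_rec_proj; lia..].
Qed.

(** Booleans are coded as 0 (false) and nonzero (true). *)
Definition b2n (b : bool) : nat := if b then 1 else 0.
Definition ite (c a b : nat) : nat := match c with 0 => b | S _ => a end.
Definition eqn (x y : nat) : nat := b2n (x =? y).
Definition ltn (x y : nat) : nat := b2n (x <? y).
Definition notn (a : nat) : nat := ite a 0 1.
Definition andn (a b : nat) : nat := ite a (ite b 1 0) 0.
Definition orn (a b : nat) : nat := ite a 1 (ite b 1 0).

Lemma eqn_spec x y : eqn x y <> 0 <-> x = y.
Proof. unfold eqn, b2n; destruct (Nat.eqb_spec x y); split; congruence. Qed.

Lemma eqn_eq0 x y : eqn x y = 0 <-> x <> y.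
Proof. unfold eqn, b2n; destruct (Nat.eqb_spec x y); split; congruence. Qed.

Lemma ltn_spec x y : ltn x y <> 0 <-> x < y.
Proof. unfold ltn, b2n; destruct (Nat.ltb_spec x y); split; lia. Qed.

Lemma notn_spec a : notn a <> 0 <-> a = 0.
Proof. destruct a; simpl; split; congruence. Qed.

Lemma notn_eq0 a : notn a = 0 <-> a <> 0.
Proof. destruct a; simpl; split; congruence. Qed.

Lemma andn_spec a b : andn a b <> 0 <-> a <> 0 /\ b <> 0.
Proof. destruct a, b; simpl; intuition congruence. Qed.

Lemma orn_spec a b : orn a b <> 0 <-> a <> 0 \/ b <> 0.
Proof. destruct a, b; simpl; intuition congruence. Qed.

Lemma andn_01 a b : andn a b = 0 \/ andn a b = 1.
Proof. destruct a, b; auto. Qed.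

Lemma orn_01 a b : orn a b = 0 \/ orn a b = 1.
Proof. destruct a, b; auto. Qed.

Lemma mu_rec_ite : mu_rec 3 (fun ys => ite (nth 0 ys 0) (nth 1 ys 0) (nth 2 ys 0)).
Proof.
  apply (mu_rec_prim 2 (fun ys => nth 1 ys 0) (fun ys => nth 2 ys 0));
    [apply mu_rec_proj; lia..|reflexivity|reflexivity].
Qed.

Lemma mu_rec_eqn : mu_rec 2 (fun ys => eqn (nth 0 ys 0) (nth 1 ys 0)).
Proof.
  apply mu_rec_ext with
    (fun ys => 1 - ((nth 0 ys 0 - nth 1 ys 0) + (nth 1 ys 0 - nth 0 ys 0))).
  - apply (mu_rec_comp2 _ Nat.sub); [apply mu_rec_sub|apply mu_rec_const|].
    apply (mu_rec_comp2 _ Nat.add); [apply mu_rec_add|apply mu_rec_sub|].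
    apply (mu_rec_comp2 _ Nat.sub (fun ys => nth 1 ys 0)); [apply mu_rec_sub|apply mu_rec_proj; lia..].
  - intros xs _; unfold eqn, b2n; destruct (Nat.eqb_spec (nth 0 xs 0) (nth 1 xs 0)); lia.
Qed.

Lemma mu_rec_ltn : mu_rec 2 (fun ys => ltn (nth 0 ys 0) (nth 1 ys 0)).
Proof.
  apply mu_rec_ext with (fun ys => 1 - (1 - (nth 1 ys 0 - nth 0 ys 0))).
  - apply (mu_rec_comp2 _ Nat.sub); [apply mu_rec_sub|apply mu_rec_const|].
    apply (mu_rec_comp2 _ Nat.sub); [apply mu_rec_sub|apply mu_rec_const|].
    apply (mu_rec_comp2 _ Nat.sub (fun ys => nth 1 ys 0)); [apply mu_rec_sub|apply mu_rec_proj; lia..].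
  - intros xs _; unfold ltn, b2n; destruct (Nat.ltb_spec (nth 0 xs 0) (nth 1 xs 0)); lia.
Qed.

Lemma mu_rec_notn : mu_rec 1 (fun ys => notn (nth 0 ys 0)).
Proof. apply (mu_rec_comp3 _ ite); [apply mu_rec_ite|apply mu_rec_proj; lia|apply mu_rec_const..]. Qed.

Lemma map_nth_seq (xs : list nat) : map (fun i => nth i xs 0) (seq 0 (length xs)) = xs.
Proof.
  induction xs as [|x xs IH]; simpl; f_equal; auto.
  now rewrite <- seq_shift, map_map.
Qed.

Lemma mu_rec_cons_arg k F N :
  mu_rec (S k) F -> mu_rec k N -> mu_rec k (fun xs => F (N xs :: xs)).
Proof.
  intros HF HN; eapply mu_rec_ext.
  - apply (mu_rec_comp k (S k) F (N :: map (fun i xs => nth i xs 0) (seq 0 k))); auto.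
    + constructor; auto; apply Forall_map, Forall_forall.
      intros i Hi%in_seq; apply mu_rec_proj; lia.
    + simpl; now rewrite length_map, length_seq.
  - intros xs <-; simpl; now rewrite map_map, map_nth_seq.
Qed.

Lemma mu_rec_drop1 k F :
  mu_rec (S k) F -> mu_rec (S (S k)) (fun ys => F (nth 0 ys 0 :: tl (tl ys))).
Proof.
  intros HF; eapply mu_rec_ext.
  - apply (mu_rec_comp (S (S k)) (S k) F
             (map (fun i xs => nth i xs 0) (0 :: map (fun i => S (S i)) (seq 0 k)))); auto.
    + apply Forall_map, Forall_forall; intros i [<-|(j & <- & Hj%in_seq)%in_map_iff];
        apply mu_rec_proj; lia.
    + simpl; now rewrite !length_map, length_seq.
  - intros [|a [|b xs]] Hx; try discriminate; injection Hx as <-; simpl.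
    rewrite !map_map; simpl; now rewrite map_nth_seq.
Qed.

(** [bmin n P] is the least [j < n] with [P j <> 0], or [n] if there is none. *)
Fixpoint bmin (n : nat) (P : nat -> nat) : nat :=
  match n with
  | 0 => 0
  | S n' => ite (eqn (bmin n' P) n') (ite (P n') n' (S n')) (bmin n' P)
  end.

Definition bex (n : nat) (P : nat -> nat) : nat := ltn (bmin n P) n.
Definition ball (n : nat) (P : nat -> nat) : nat := eqn (bmin n (fun j => notn (P j))) n.

Lemma bmin_le n P : bmin n P <= n.
Proof.
  induction n; simpl; auto; unfold eqn, b2n.
  destruct (Nat.eqb_spec (bmin n P) n); simpl; [destruct (P n); simpl|]; lia.
Qed.

Lemma bmin_below n P j : j < bmin n P -> P j = 0.
Proof.
  induction n; simpl; intros Hj; [lia|]; unfold eqn, b2n in Hj.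
  destruct (Nat.eqb_spec (bmin n P) n); simpl in Hj; auto.
  destruct (P n) eqn:Hn; simpl in Hj.
  - destruct (Nat.eq_dec j n) as [->|]; auto; apply IHn; lia.
  - apply IHn; lia.
Qed.

Lemma bmin_found n P : bmin n P < n -> P (bmin n P) <> 0.
Proof.
  induction n; simpl; intros H; [lia|]; unfold eqn, b2n in *.
  destruct (Nat.eqb_spec (bmin n P) n); simpl in *.
  - destruct (P n) eqn:Hn; simpl in *; [lia|congruence].
  - apply IHn; pose proof (bmin_le n P); lia.
Qed.

Lemma bmin_least n P j : j < n -> P j <> 0 -> bmin n P <= j.
Proof.
  intros Hj HP; destruct (Nat.le_gt_cases (bmin n P) j); auto.
  now apply bmin_below in H.
Qed.

Lemma bex_spec n P : bex n P <> 0 <-> exists j, j < n /\ P j <> 0.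
Proof.
  unfold bex; rewrite ltn_spec; split.
  - intros H; exists (bmin n P); auto using bmin_found.
  - intros (j & Hj & HP); pose proof (bmin_least n P j Hj HP); lia.
Qed.

Lemma ball_spec n P : ball n P <> 0 <-> forall j, j < n -> P j <> 0.
Proof.
  unfold ball; rewrite eqn_spec; split.
  - intros H j Hj HP; pose proof (bmin_least n (fun j => notn (P j)) j Hj).
    rewrite notn_spec in H0; lia.
  - intros H; pose proof (bmin_le n (fun j => notn (P j))).
    destruct (Nat.eq_dec (bmin n (fun j => notn (P j))) n) as [|Hne]; auto.
    assert (Hlt : bmin n (fun j => notn (P j)) < n) by lia.
    destruct (H _ Hlt (proj1 (notn_spec _) (bmin_found _ _ Hlt))).
Qed.

Lemma mu_rec_bmin k N P :
  mu_rec k N -> mu_rec (S k) (fun ys => P (nth 0 ys 0) (tl ys)) ->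
  mu_rec k (fun xs => bmin (N xs) (fun j => P j xs)).
Proof.
  intros HN HP.
  assert (H : mu_rec (S k) (fun ys => bmin (nth 0 ys 0) (fun j => P j (tl ys)))).
  { apply (mu_rec_prim k (fun _ => 0)
      (fun ys => ite (eqn (nth 1 ys 0) (nth 0 ys 0))
                     (ite (P (nth 0 ys 0) (tl (tl ys))) (nth 0 ys 0) (S (nth 0 ys 0)))
                     (nth 1 ys 0))); [apply mu_rec_zero| |reflexivity|reflexivity].
    apply (mu_rec_comp3 _ ite); [apply mu_rec_ite| | |apply mu_rec_proj; lia].
    - apply (mu_rec_comp2 _ eqn); [apply mu_rec_eqn|apply mu_rec_proj; lia..].
    - apply (mu_rec_comp3 _ ite); [apply mu_rec_ite|exact (mu_rec_drop1 k _ HP)| |].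
      + apply mu_rec_proj; lia.
      + apply mu_rec_succ, mu_rec_proj; lia. }
  exact (mu_rec_cons_arg k _ N H HN).
Qed.

Lemma mu_rec_bex k N P :
  mu_rec k N -> mu_rec (S k) (fun ys => P (nth 0 ys 0) (tl ys)) ->
  mu_rec k (fun xs => bex (N xs) (fun j => P j xs)).
Proof.
  intros HN HP; apply (mu_rec_comp2 _ ltn); [apply mu_rec_ltn|now apply mu_rec_bmin|auto].
Qed.

Lemma mu_rec_ball k N P :
  mu_rec k N -> mu_rec (S k) (fun ys => P (nth 0 ys 0) (tl ys)) ->
  mu_rec k (fun xs => ball (N xs) (fun j => P j xs)).
Proof.
  intros HN HP; apply (mu_rec_comp2 _ eqn); [apply mu_rec_eqn| |auto].
  apply (mu_rec_bmin k N (fun j xs => notn (P j xs))); auto.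
  apply (mu_rec_comp1 _ notn); auto using mu_rec_notn.
Qed.

Create HintDb mu_rec.
#[export] Hint Resolve mu_rec_pred mu_rec_add mu_rec_mul mu_rec_sub mu_rec_ite mu_rec_eqn
  mu_rec_ltn mu_rec_notn : mu_rec.

(* Decomposes [e] in [mu_rec k (fun xs => e)] along its syntax; each head function
   needs its [mu_rec] fact in the hint database. *)
Ltac mu_rec_auto := repeat (match goal with
 | |- mu_rec _ (fun _ => ?c) => apply mu_rec_const
 | |- mu_rec _ (fun xs => nth ?i xs 0) => apply mu_rec_proj; lia
 | |- mu_rec _ (fun xs => nth ?i (tl xs) 0) => apply mu_rec_proj_tl; lia
 | |- mu_rec _ (fun xs => nth ?i (tl (tl xs)) 0) => apply mu_rec_proj_tl2; lia
 | |- mu_rec _ (fun xs => S (@?G xs)) => apply (mu_rec_succ _ G)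
 | |- mu_rec _ (fun xs => bmin (@?N xs) (fun j => @?P j xs)) => apply (mu_rec_bmin _ N P)
 | |- mu_rec _ (fun xs => bex (@?N xs) (fun j => @?P j xs)) => apply (mu_rec_bex _ N P)
 | |- mu_rec _ (fun xs => ball (@?N xs) (fun j => @?P j xs)) => apply (mu_rec_ball _ N P)
 | |- mu_rec _ (fun xs => ?F (@?G1 xs) (@?G2 xs) (@?G3 xs) (@?G4 xs) (@?G5 xs) (@?G6 xs)) =>
     apply (mu_rec_comp6 _ F); [solve [eauto with mu_rec] | .. ]
 | |- mu_rec _ (fun xs => ?F (@?G1 xs) (@?G2 xs) (@?G3 xs) (@?G4 xs) (@?G5 xs)) =>
     apply (mu_rec_comp5 _ F); [solve [eauto with mu_rec] | .. ]
 | |- mu_rec _ (fun xs => ?F (@?G1 xs) (@?G2 xs) (@?G3 xs) (@?G4 xs)) =>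
     apply (mu_rec_comp4 _ F); [solve [eauto with mu_rec] | .. ]
 | |- mu_rec _ (fun xs => ?F (@?G1 xs) (@?G2 xs) (@?G3 xs)) =>
     apply (mu_rec_comp3 _ F); [solve [eauto with mu_rec] | .. ]
 | |- mu_rec _ (fun xs => ?F (@?G1 xs) (@?G2 xs)) =>
     apply (mu_rec_comp2 _ F); [solve [eauto with mu_rec] | .. ]
 | |- mu_rec _ (fun xs => ?F (@?G1 xs)) =>
     apply (mu_rec_comp1 _ F); [solve [eauto with mu_rec] | .. ]
 end; cbv beta).

Lemma mu_rec_andn : mu_rec 2 (fun ys => andn (nth 0 ys 0) (nth 1 ys 0)).
Proof. unfold andn; mu_rec_auto. Qed.

Lemma mu_rec_orn : mu_rec 2 (fun ys => orn (nth 0 ys 0) (nth 1 ys 0)).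
Proof. unfold orn; mu_rec_auto. Qed.

#[export] Hint Resolve mu_rec_andn mu_rec_orn : mu_rec.

(** * Codes of pairs and lists *)

Definition tri (n : nat) : nat := nat_rec (fun _ => nat) 0 (fun i m => S i + m) n.

(* Convertible to [Cantor.to_nat (x, y)], but built from functions known to be [mu_rec]. *)
Definition cpair (x y : nat) : nat := y + tri (y + x).

Lemma cpair_to_nat x y : cpair x y = Cantor.to_nat (x, y).
Proof. reflexivity. Qed.

Lemma cpair_inj x y x' y' : cpair x y = cpair x' y' -> x = x' /\ y = y'.
Proof. rewrite !cpair_to_nat; intros H; apply to_nat_inj in H; now injection H. Qed.

Lemma cpair_ge x y : x <= cpair x y /\ y <= cpair x y.
Proof. rewrite cpair_to_nat; pose proof (to_nat_non_decreasing x y); lia. Qed.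

Lemma cpair_surj c : exists x y, cpair x y = c.
Proof.
  destruct (Cantor.of_nat c) as [x y] eqn:Hc; exists x, y.
  now rewrite cpair_to_nat, <- Hc, cancel_to_of.
Qed.

Lemma mu_rec_tri : mu_rec 1 (fun ys => tri (nth 0 ys 0)).
Proof.
  apply (mu_rec_prim 0 (fun _ => 0) (fun ys => S (nth 0 ys 0) + nth 1 ys 0));
    [apply mu_rec_zero|mu_rec_auto|reflexivity|reflexivity].
Qed.
#[export] Hint Resolve mu_rec_tri : mu_rec.

Lemma mu_rec_cpair : mu_rec 2 (fun ys => cpair (nth 0 ys 0) (nth 1 ys 0)).
Proof. unfold cpair; mu_rec_auto. Qed.
#[export] Hint Resolve mu_rec_cpair : mu_rec.

Definition cfst (c : nat) : nat := bmin (S c) (fun x => bex (S c) (fun y => eqn (cpair x y) c)).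
Definition csnd (c : nat) : nat := bmin (S c) (fun y => eqn (cpair (cfst c) y) c).

Lemma mu_rec_cfst : mu_rec 1 (fun ys => cfst (nth 0 ys 0)).
Proof. unfold cfst; mu_rec_auto. Qed.
#[export] Hint Resolve mu_rec_cfst : mu_rec.

Lemma mu_rec_csnd : mu_rec 1 (fun ys => csnd (nth 0 ys 0)).
Proof. unfold csnd; mu_rec_auto. Qed.
#[export] Hint Resolve mu_rec_csnd : mu_rec.

Lemma bmin_eq n P x : x < n -> P x <> 0 -> (forall m, P m <> 0 -> x <= m) -> bmin n P = x.
Proof.
  intros Hx HP Hleast; pose proof (bmin_least n P x Hx HP).
  enough (x <= bmin n P) by lia; apply Hleast, bmin_found; lia.
Qed.

Lemma cfst_cpair x y : cfst (cpair x y) = x.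
Proof.
  pose proof (cpair_ge x y); apply bmin_eq; [lia|..].
  - apply bex_spec; exists y; split; [lia|]; now apply eqn_spec.
  - intros m (y' & _ & Hy')%bex_spec; apply eqn_spec, cpair_inj in Hy'; lia.
Qed.

Lemma csnd_cpair x y : csnd (cpair x y) = y.
Proof.
  unfold csnd; rewrite cfst_cpair; pose proof (cpair_ge x y); apply bmin_eq; [lia|..].
  - now apply eqn_spec.
  - intros m Hm%eqn_spec; apply cpair_inj in Hm; lia.
Qed.

Lemma cpair_cfst_csnd c : cpair (cfst c) (csnd c) = c.
Proof. destruct (cpair_surj c) as (x & y & <-); now rewrite cfst_cpair, csnd_cpair. Qed.

Lemma cfst_le c : cfst c <= c.
Proof. rewrite <- (cpair_cfst_csnd c) at 2; apply cpair_ge. Qed.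

Lemma csnd_le c : csnd c <= c.
Proof. rewrite <- (cpair_cfst_csnd c) at 2; apply cpair_ge. Qed.

(** Codes of lists: [0] codes [[]] and [S (cpair x c)] codes [x :: l] when [c] codes [l]. *)
Definition ccons (x c : nat) : nat := S (cpair x c).
Definition chd (c : nat) : nat := cfst (pred c).
Definition ctl (c : nat) : nat := csnd (pred c).
Fixpoint cdrop (n c : nat) : nat := match n with 0 => c | S n => ctl (cdrop n c) end.
Definition cnth (c i : nat) : nat := chd (cdrop i c).
Definition clen (c : nat) : nat := bmin (S c) (fun n => eqn (cdrop n c) 0).

Fixpoint code_list (l : list nat) : nat :=
  match l with [] => 0 | x :: l => ccons x (code_list l) end.

Lemma mu_rec_ccons : mu_rec 2 (fun ys => ccons (nth 0 ys 0) (nth 1 ys 0)).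
Proof. unfold ccons; mu_rec_auto. Qed.

Lemma mu_rec_chd : mu_rec 1 (fun ys => chd (nth 0 ys 0)).
Proof. unfold chd; mu_rec_auto. Qed.

Lemma mu_rec_ctl : mu_rec 1 (fun ys => ctl (nth 0 ys 0)).
Proof. unfold ctl; mu_rec_auto. Qed.
#[export] Hint Resolve mu_rec_ccons mu_rec_chd mu_rec_ctl : mu_rec.

Lemma mu_rec_cdrop : mu_rec 2 (fun ys => cdrop (nth 0 ys 0) (nth 1 ys 0)).
Proof.
  apply (mu_rec_prim 1 (fun ys => nth 0 ys 0) (fun ys => ctl (nth 1 ys 0)));
    [mu_rec_auto|mu_rec_auto|reflexivity|reflexivity].
Qed.
#[export] Hint Resolve mu_rec_cdrop : mu_rec.

Lemma mu_rec_cnth : mu_rec 2 (fun ys => cnth (nth 0 ys 0) (nth 1 ys 0)).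
Proof. unfold cnth; mu_rec_auto. Qed.

Lemma mu_rec_clen : mu_rec 1 (fun ys => clen (nth 0 ys 0)).
Proof. unfold clen; mu_rec_auto. Qed.
#[export] Hint Resolve mu_rec_cnth mu_rec_clen : mu_rec.

Lemma chd_ccons x c : chd (ccons x c) = x.
Proof. apply cfst_cpair. Qed.

Lemma ctl_ccons x c : ctl (ccons x c) = c.
Proof. apply csnd_cpair. Qed.

Lemma ctl_0 : ctl 0 = 0.
Proof. pose proof (csnd_le 0); unfold ctl; simpl; lia. Qed.

Lemma ctl_code_list l : ctl (code_list l) = code_list (tl l).
Proof. destruct l; [apply ctl_0|apply ctl_ccons]. Qed.

Lemma cdrop_S n c : cdrop (S n) c = cdrop n (ctl c).
Proof.
  induction n as [|n IH]; [reflexivity|].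
  change (ctl (cdrop (S n) c) = ctl (cdrop n (ctl c))); now rewrite IH.
Qed.

Lemma cdrop_code_list n l : cdrop n (code_list l) = code_list (skipn n l).
Proof.
  revert l; induction n as [|n IH]; intros l; auto.
  rewrite cdrop_S, ctl_code_list, IH; destruct l; simpl; [now rewrite skipn_nil|reflexivity].
Qed.

Lemma chd_code_list l : chd (code_list l) = hd 0 l.
Proof. destruct l; [pose proof (cfst_le 0); unfold chd; simpl; lia|apply chd_ccons]. Qed.

Lemma cnth_code_list l i : cnth (code_list l) i = nth i l 0.
Proof.
  unfold cnth; rewrite cdrop_code_list, chd_code_list.
  revert l; induction i; intros [|x l]; simpl; auto.
Qed.

Lemma clen_code_list l : clen (code_list l) = length l.
Proof.
  assert (Hlen : length l <= code_list l).
  { induction l as [|x l IH]; simpl; auto; pose proof (cpair_ge x (code_list l)); unfold ccons; lia. }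
  apply bmin_eq; [lia|..].
  - apply eqn_spec; now rewrite cdrop_code_list, skipn_all.
  - intros m Hm%eqn_spec; rewrite cdrop_code_list in Hm.
    destruct (skipn m l) eqn:Hs; [|discriminate].
    apply (f_equal (@length nat)) in Hs; rewrite length_skipn in Hs; simpl in Hs; lia.
Qed.

Lemma code_list_surj c : exists l, code_list l = c.
Proof.
  induction c as [[|c] IH] using (well_founded_induction lt_wf); [now exists []|].
  destruct (IH (csnd c)) as [l Hl]; [pose proof (csnd_le c); lia|].
  exists (cfst c :: l); simpl; now rewrite Hl; unfold ccons; rewrite cpair_cfst_csnd.
Qed.

(** * Halting certificates *)

Fixpoint code_prog (p : prog) : nat :=
  match p with
  | PZero => cpair 0 0
  | PSucc => cpair 1 0
  | PProj i => cpair 2 i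
  | PComp f gs => cpair 3 (cpair (code_prog f) (code_list (map code_prog gs)))
  | PPrim f g => cpair 4 (cpair (code_prog f) (code_prog g))
  | PMu f => cpair 5 (code_prog f)
  end.

(** A fact [cfact pc xc y] claims that the program coded by [pc] maps the
    arguments coded by [xc] to [y]. *)
Definition cfact (pc xc y : nat) : nat := cpair pc (cpair xc y).
Definition code_fact (p : prog) (xs : list nat) (y : nat) : nat :=
  cfact (code_prog p) (code_list xs) y.
Definition fact_prog (t : nat) : nat := cfst t.
Definition fact_args (t : nat) : nat := cfst (csnd t).
Definition fact_val (t : nat) : nat := csnd (csnd t).

Lemma fact_prog_cfact pc xc y : fact_prog (cfact pc xc y) = pc.
Proof. apply cfst_cpair. Qed.

Lemma fact_args_cfact pc xc y : fact_args (cfact pc xc y) = xc.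
Proof. unfold fact_args, cfact; now rewrite csnd_cpair, cfst_cpair. Qed.

Lemma fact_val_cfact pc xc y : fact_val (cfact pc xc y) = y.
Proof. unfold fact_val, cfact; now rewrite !csnd_cpair. Qed.

(** [justified Ear pc xc y]: the fact [cfact pc xc y] follows by one rule of
    [eval] from facts satisfying [Ear]. *)
Definition justified (Ear : nat -> Prop) (pc xc y : nat) : Prop :=
  match cfst pc with
  | 0 => y = 0
  | 1 => xc <> 0 /\ y = S (chd xc)
  | 2 => csnd pc < clen xc /\ y = cnth xc (csnd pc)
  | 3 => exists u, Ear u /\ fact_prog u = cfst (csnd pc) /\ fact_val u = y /\
           clen (fact_args u) = clen (csnd (csnd pc)) /\
           forall m, m < clen (csnd (csnd pc)) ->
             Ear (cfact (cnth (csnd (csnd pc)) m) xc (cnth (fact_args u) m))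
  | 4 => xc <> 0 /\
         ((chd xc = 0 /\ Ear (cfact (cfst (csnd pc)) (ctl xc) y)) \/
          (chd xc <> 0 /\ exists u, Ear u /\ fact_prog u = pc /\
             fact_args u = ccons (pred (chd xc)) (ctl xc) /\
             Ear (cfact (csnd (csnd pc)) (ccons (pred (chd xc)) (ccons (fact_val u) (ctl xc))) y)))
  | 5 => Ear (cfact (csnd pc) (ccons y xc) 0) /\
         forall m, m < y -> exists u, Ear u /\ fact_prog u = csnd pc /\
                                     fact_args u = ccons m xc /\ fact_val u <> 0
  | _ => False
  end.

Lemma justified_mono (E1 E2 : nat -> Prop) pc xc y :
  (forall u, E1 u -> E2 u) -> justified E1 pc xc y -> justified E2 pc xc y.
Proof.
  intros H; unfold justified; destruct (cfst pc) as [|[|[|[|[|[|]]]]]]; auto.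
  - intros (u & Hu & Hrest); exists u; intuition.
  - intros [Hx [[H0 Hu]|(H0 & u & Hu & Hrest)]]; split; auto.
    right; split; auto; exists u; intuition.
  - intros [Hu Hlt]; split; auto; intros m Hm; destruct (Hlt m Hm) as (u & ? & ?); eauto.
Qed.

Definition in_prefix (C i u : nat) : Prop := exists j, j < i /\ cnth C j = u.

Definition bex_prefix (C i : nat) (Q : nat -> nat) : nat := bex i (fun j => Q (cnth C j)).
Definition earlier (C i t : nat) : nat := bex_prefix C i (fun u => eqn u t).

Lemma bex_prefix_spec C i Q : bex_prefix C i Q <> 0 <-> exists u, in_prefix C i u /\ Q u <> 0.
Proof.
  unfold bex_prefix; rewrite bex_spec; split.
  - intros (j & Hj & HQ); exists (cnth C j); split; auto; now exists j.
  - intros (u & (j & Hj & <-) & HQ); eauto.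
Qed.

Lemma earlier_spec C i t : earlier C i t <> 0 <-> in_prefix C i t.
Proof.
  unfold earlier; rewrite bex_prefix_spec; split.
  - intros (u & Hu & ->%eqn_spec); auto.
  - intros Ht; exists t; split; auto; now apply eqn_spec.
Qed.

Definition just_comp (C i pc xc y : nat) : nat :=
  bex_prefix C i (fun u =>
    andn (andn (eqn (fact_prog u) (cfst (csnd pc))) (eqn (fact_val u) y))
         (andn (eqn (clen (fact_args u)) (clen (csnd (csnd pc))))
               (ball (clen (csnd (csnd pc))) (fun m =>
                  earlier C i (cfact (cnth (csnd (csnd pc)) m) xc (cnth (fact_args u) m)))))).

Definition just_prim (C i pc xc y : nat) : nat :=
  andn (notn (eqn xc 0))
    (ite (chd xc)
       (bex_prefix C i (fun u =>
          andn (andn (eqn (fact_prog u) pc) (eqn (fact_args u) (ccons (pred (chd xc)) (ctl xc))))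
               (earlier C i (cfact (csnd (csnd pc))
                                   (ccons (pred (chd xc)) (ccons (fact_val u) (ctl xc))) y))))
       (earlier C i (cfact (cfst (csnd pc)) (ctl xc) y))).

Definition just_mu (C i pc xc y : nat) : nat :=
  andn (earlier C i (cfact (csnd pc) (ccons y xc) 0))
       (ball y (fun m => bex_prefix C i (fun u =>
          andn (andn (eqn (fact_prog u) (csnd pc)) (eqn (fact_args u) (ccons m xc)))
               (notn (eqn (fact_val u) 0))))).

Definition justb (C i pc xc y : nat) : nat :=
  ite (eqn (cfst pc) 0) (eqn y 0)
  (ite (eqn (cfst pc) 1) (andn (notn (eqn xc 0)) (eqn y (S (chd xc))))
  (ite (eqn (cfst pc) 2) (andn (ltn (csnd pc) (clen xc)) (eqn y (cnth xc (csnd pc))))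
  (ite (eqn (cfst pc) 3) (just_comp C i pc xc y)
  (ite (eqn (cfst pc) 4) (just_prim C i pc xc y)
  (ite (eqn (cfst pc) 5) (just_mu C i pc xc y) 0))))).

Lemma just_comp_spec C i pc xc y :
  just_comp C i pc xc y <> 0 <->
  exists u, in_prefix C i u /\ fact_prog u = cfst (csnd pc) /\ fact_val u = y /\
    clen (fact_args u) = clen (csnd (csnd pc)) /\
    forall m, m < clen (csnd (csnd pc)) ->
      in_prefix C i (cfact (cnth (csnd (csnd pc)) m) xc (cnth (fact_args u) m)).
Proof.
  unfold just_comp; rewrite bex_prefix_spec.
  repeat setoid_rewrite andn_spec; setoid_rewrite ball_spec; setoid_rewrite earlier_spec.
  repeat setoid_rewrite eqn_spec; split; intros (u & Hu & H); exists u; tauto.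
Qed.

Lemma just_prim_spec C i pc xc y :
  just_prim C i pc xc y <> 0 <->
  xc <> 0 /\
  ((chd xc = 0 /\ in_prefix C i (cfact (cfst (csnd pc)) (ctl xc) y)) \/
   (chd xc <> 0 /\ exists u, in_prefix C i u /\ fact_prog u = pc /\
      fact_args u = ccons (pred (chd xc)) (ctl xc) /\
      in_prefix C i (cfact (csnd (csnd pc)) (ccons (pred (chd xc)) (ccons (fact_val u) (ctl xc))) y))).
Proof.
  unfold just_prim; rewrite andn_spec, notn_spec, eqn_eq0.
  destruct (chd xc); simpl.
  - rewrite earlier_spec; intuition.
  - rewrite bex_prefix_spec; repeat setoid_rewrite andn_spec; setoid_rewrite earlier_spec.
    repeat setoid_rewrite eqn_spec; split; intros [Hx H]; split; auto.
    + right; split; [lia|]; destruct H as (u & Hu); exists u; tauto.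
    + destruct H as [[? _]|[_ (u & Hu)]]; [lia|]; exists u; tauto.
Qed.

Lemma just_mu_spec C i pc xc y :
  just_mu C i pc xc y <> 0 <->
  in_prefix C i (cfact (csnd pc) (ccons y xc) 0) /\
  forall m, m < y -> exists u, in_prefix C i u /\ fact_prog u = csnd pc /\
                              fact_args u = ccons m xc /\ fact_val u <> 0.
Proof.
  unfold just_mu; rewrite andn_spec, earlier_spec, ball_spec.
  setoid_rewrite bex_prefix_spec; repeat setoid_rewrite andn_spec;
  setoid_rewrite notn_spec; setoid_rewrite eqn_eq0; repeat setoid_rewrite eqn_spec.
  split; intros [H0 H]; split; auto; intros m Hm; destruct (H m Hm) as (u & Hu); exists u; tauto.
Qed.

Lemma justb_spec C i pc xc y : justb C i pc xc y <> 0 <-> justified (in_prefix C i) pc xc y.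
Proof.
  unfold justb, justified; destruct (cfst pc) as [|[|[|[|[|[|t]]]]]]; simpl.
  - apply eqn_spec.
  - now rewrite andn_spec, notn_spec, eqn_eq0, eqn_spec.
  - now rewrite andn_spec, ltn_spec, eqn_spec.
  - apply just_comp_spec.
  - apply just_prim_spec.
  - apply just_mu_spec.
  - tauto.
Qed.

Lemma mu_rec_cfact : mu_rec 3 (fun ys => cfact (nth 0 ys 0) (nth 1 ys 0) (nth 2 ys 0)).
Proof. unfold cfact; mu_rec_auto. Qed.

Lemma mu_rec_fact_prog : mu_rec 1 (fun ys => fact_prog (nth 0 ys 0)).
Proof. unfold fact_prog; mu_rec_auto. Qed.

Lemma mu_rec_fact_args : mu_rec 1 (fun ys => fact_args (nth 0 ys 0)).
Proof. unfold fact_args; mu_rec_auto. Qed.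

Lemma mu_rec_fact_val : mu_rec 1 (fun ys => fact_val (nth 0 ys 0)).
Proof. unfold fact_val; mu_rec_auto. Qed.
#[export] Hint Resolve mu_rec_cfact mu_rec_fact_prog mu_rec_fact_args mu_rec_fact_val : mu_rec.

Lemma mu_rec_earlier : mu_rec 3 (fun ys => earlier (nth 0 ys 0) (nth 1 ys 0) (nth 2 ys 0)).
Proof. unfold earlier, bex_prefix; mu_rec_auto. Qed.
#[export] Hint Resolve mu_rec_earlier : mu_rec.

Lemma mu_rec_justb :
  mu_rec 5 (fun ys => justb (nth 0 ys 0) (nth 1 ys 0) (nth 2 ys 0) (nth 3 ys 0) (nth 4 ys 0)).
Proof. unfold justb, just_comp, just_prim, just_mu, bex_prefix; mu_rec_auto. Qed.
#[export] Hint Resolve mu_rec_justb : mu_rec.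

(** [C] certifies that the program coded by [e] halts on input [x]: it codes a list of facts,
    each justified by earlier ones, among which one about [e] on the argument list [[x]]. *)
Definition validb (C : nat) : nat :=
  ball (clen C) (fun i => justb C i (fact_prog (cnth C i)) (fact_args (cnth C i)) (fact_val (cnth C i))).

Definition halt_certb (e x C : nat) : nat :=
  andn (validb C)
       (bex (clen C) (fun j => andn (eqn (fact_prog (cnth C j)) e)
                                    (eqn (fact_args (cnth C j)) (ccons x 0)))).

Lemma mu_rec_halt_certb :
  mu_rec 3 (fun ys => halt_certb (nth 0 ys 0) (nth 1 ys 0) (nth 2 ys 0)).
Proof. unfold halt_certb, validb; mu_rec_auto. Qed.
#[export] Hint Resolve mu_rec_halt_certb : mu_rec.

Definition valid_trace (L : list nat) : Prop :=
  forall i, i < length L ->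
    justified (fun u => exists j, j < i /\ nth j L 0 = u)
              (fact_prog (nth i L 0)) (fact_args (nth i L 0)) (fact_val (nth i L 0)).

Lemma validb_spec L : validb (code_list L) <> 0 <-> valid_trace L.
Proof.
  unfold validb, valid_trace; rewrite ball_spec, clen_code_list.
  setoid_rewrite justb_spec; setoid_rewrite cnth_code_list.
  split; intros H i Hi; eapply justified_mono; try apply (H i Hi);
    intros u (j & Hj & Hu); exists j; now rewrite ?cnth_code_list in *.
Qed.

Lemma evals_length gs xs ys : evals gs xs ys -> length ys = length gs.
Proof. induction 1; simpl; auto. Qed.

Lemma evals_nth gs xs ys :
  length ys = length gs ->
  (forall m, m < length gs -> eval (nth m gs PZero) xs (nth m ys 0)) -> evals gs xs ys.
Proof.
  revert ys; induction gs as [|g gs IH]; intros [|y ys] Hlen H; try discriminate; constructor.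
  - apply (H 0); simpl; lia.
  - apply IH; [simpl in Hlen; lia|]; intros m Hm; apply (H (S m)); simpl; lia.
Qed.

Lemma cnth_code_progs gs m :
  m < length gs -> cnth (code_list (map code_prog gs)) m = code_prog (nth m gs PZero).
Proof.
  intros Hm; rewrite cnth_code_list, nth_indep with (d' := code_prog PZero) by now rewrite length_map.
  apply map_nth.
Qed.

Ltac simpl_cpair := repeat (rewrite cfst_cpair || rewrite csnd_cpair).

Lemma justified_sound (Ear : nat -> Prop) p xs y :
  (forall u q zs, Ear u -> fact_prog u = code_prog q -> fact_args u = code_list zs ->
                  eval q zs (fact_val u)) ->
  justified Ear (code_prog p) (code_list xs) y -> eval p xs y.
Proof.
  intros IHu.
  assert (IHf : forall q zs z, Ear (code_fact q zs z) -> eval q zs z).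
  { intros q zs z H; rewrite <- (fact_val_cfact (code_prog q) (code_list zs) z).
    apply IHu; auto using fact_prog_cfact, fact_args_cfact. }
  unfold justified; destruct p as [| |i|f gs|f g|f]; cbn [code_prog]; simpl_cpair; cbv beta iota.
  - intros ->; constructor.
  - destruct xs as [|x xs]; [intros [[] _]; reflexivity|].
    intros [_ ->]; rewrite chd_code_list; constructor.
  - rewrite clen_code_list, cnth_code_list; intros [Hi ->].
    constructor; now apply nth_error_nth'.
  - rewrite clen_code_list, length_map; intros (u & Hu & Hf & <- & Hlen & Hgs).
    destruct (code_list_surj (fact_args u)) as [ys Hys].
    rewrite <- Hys, clen_code_list in Hlen.
    apply ev_comp with ys; [apply evals_nth; auto|now apply IHu].
    intros m Hm; specialize (Hgs m Hm).
    rewrite cnth_code_progs, <- Hys, cnth_code_list in Hgs by auto.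
    now apply IHf.
  - destruct xs as [|n xs]; [intros [[] _]; reflexivity|].
    rewrite chd_code_list, ctl_code_list; cbn [hd tl].
    intros [_ [[-> Hf]|(Hn & u & Hu & Hpc & Hargs & Hg)]]; [constructor; now apply (IHf f xs)|].
    destruct n as [|n]; [lia|]; cbn [pred] in *.
    apply ev_primS with (fact_val u); [now apply IHu|].
    now apply (IHf g (n :: fact_val u :: xs)).
  - intros [Hf Hlt]; constructor; [now apply (IHf f (y :: xs))|].
    intros m Hm; destruct (Hlt m Hm) as (u & Hu & Hp & Hargs & Hval).
    destruct (fact_val u) as [|k] eqn:Hk; [congruence|].
    exists k; rewrite <- Hk; now apply (IHu u f (m :: xs)).
Qed.

Lemma valid_trace_sound L i p xs :
  valid_trace L -> i < length L ->
  fact_prog (nth i L 0) = code_prog p -> fact_args (nth i L 0) = code_list xs ->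
  eval p xs (fact_val (nth i L 0)).
Proof.
  intros HL; revert p xs; induction i as [i IH] using (well_founded_induction lt_wf).
  intros p xs Hi Hp Hx; apply (justified_sound (fun u => exists j, j < i /\ nth j L 0 = u)).
  - intros u q zs (j & Hj & <-); apply IH; lia.
  - rewrite <- Hp, <- Hx; now apply HL.
Qed.

Lemma valid_trace_app L1 L2 : valid_trace L1 -> valid_trace L2 -> valid_trace (L1 ++ L2).
Proof.
  intros H1 H2 i Hi; rewrite length_app in Hi.
  destruct (Nat.lt_ge_cases i (length L1)) as [Hl|Hl].
  - rewrite app_nth1 by auto; eapply justified_mono; [|now apply H1].
    intros u (j & Hj & <-); exists j; split; auto; rewrite app_nth1; auto; lia.
  - rewrite app_nth2 by auto; eapply justified_mono; [|apply H2; lia].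
    intros u (j & Hj & <-); exists (length L1 + j); split; [lia|].
    rewrite app_nth2 by lia; f_equal; lia.
Qed.

Lemma valid_trace_snoc L t :
  valid_trace L -> justified (fun u => In u L) (fact_prog t) (fact_args t) (fact_val t) ->
  valid_trace (L ++ [t]).
Proof.
  intros HL Ht i Hi; rewrite length_app in Hi; simpl in Hi.
  destruct (Nat.lt_ge_cases i (length L)) as [Hl|Hl].
  - rewrite app_nth1 by auto; eapply justified_mono; [|now apply HL].
    intros u (j & Hj & <-); exists j; split; auto; rewrite app_nth1; auto; lia.
  - replace i with (length L) by lia; rewrite nth_middle.
    eapply justified_mono; [|exact Ht].
    intros u (j & Hj & <-)%(In_nth _ _ 0); exists j; split; auto; now rewrite app_nth1.
Qed.

Definition derivable (t : nat) : Prop := exists L, valid_trace L /\ In t L.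

Lemma derivable_all ts : Forall derivable ts -> exists L, valid_trace L /\ incl ts L.
Proof.
  induction 1 as [|t ts (L1 & H1 & Ht) _ (L2 & H2 & Hts)].
  - exists []; split; [intros i Hi; simpl in Hi; lia|apply incl_nil_l].
  - exists (L1 ++ L2); split; [now apply valid_trace_app|].
    apply incl_cons; [apply in_or_app; auto|now apply incl_appr].
Qed.

Lemma derivable_by_rule ts pc xc y :
  Forall derivable ts -> justified (fun u => In u ts) pc xc y -> derivable (cfact pc xc y).
Proof.
  intros (L & HL & Hincl)%derivable_all Hj; exists (L ++ [cfact pc xc y]); split.
  - apply valid_trace_snoc; auto.
    rewrite fact_prog_cfact, fact_args_cfact, fact_val_cfact.
    eapply justified_mono; [|exact Hj]; auto.
  - apply in_or_app; simpl; auto.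
Qed.

Lemma Forall_map_seq (P : nat -> Prop) (f : nat -> nat) n :
  (forall m, m < n -> P (f m)) -> Forall P (map f (seq 0 n)).
Proof. intros H; apply Forall_map, Forall_forall; intros m Hm%in_seq; apply H; lia. Qed.

Lemma In_map_seq (f : nat -> nat) n m : m < n -> In (f m) (map f (seq 0 n)).
Proof. intros Hm; apply in_map, in_seq; lia. Qed.

Lemma finite_collect (D : nat -> Prop) (Q : nat -> nat -> Prop) n :
  (forall m, m < n -> exists t, D t /\ Q m t) ->
  exists ts, Forall D ts /\ forall m, m < n -> exists t, In t ts /\ Q m t.
Proof.
  induction n as [|n IH]; intros H; [exists []; split; [constructor|intros; lia]|].
  destruct IH as (ts & Hts & HQ); [intros m Hm; apply H; lia|].
  destruct (H n) as (t & Ht & HQt); [lia|].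
  exists (ts ++ [t]); split; [apply Forall_app; auto|].
  intros m Hm; destruct (Nat.eq_dec m n) as [->|Hne].
  - exists t; split; auto; apply in_or_app; simpl; auto.
  - destruct (HQ m) as (t' & ? & ?); [lia|]; exists t'; split; auto; apply in_or_app; auto.
Qed.

Lemma derivable_comp f gs xs ys y :
  derivable (code_fact f ys y) -> length ys = length gs ->
  (forall m, m < length gs -> derivable (code_fact (nth m gs PZero) xs (nth m ys 0))) ->
  derivable (code_fact (PComp f gs) xs y).
Proof.
  intros Hf Hlen Hgs.
  apply (derivable_by_rule (code_fact f ys y ::
           map (fun m => code_fact (nth m gs PZero) xs (nth m ys 0)) (seq 0 (length gs)))).
  - constructor; [exact Hf|now apply Forall_map_seq].
  - unfold justified; cbn [code_prog]; simpl_cpair; cbv beta iota.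
    exists (code_fact f ys y); unfold code_fact.
    rewrite fact_prog_cfact, fact_val_cfact, fact_args_cfact, !clen_code_list, length_map, Hlen.
    repeat split; auto; [simpl; auto|].
    intros m Hm; right; rewrite cnth_code_progs, cnth_code_list by auto.
    exact (In_map_seq (fun m => code_fact (nth m gs PZero) xs (nth m ys 0)) _ _ Hm).
Qed.

Lemma derivable_mu f xs n :
  derivable (code_fact f (n :: xs) 0) ->
  (forall m, m < n -> exists k, derivable (code_fact f (m :: xs) (S k))) ->
  derivable (code_fact (PMu f) xs n).
Proof.
  intros H0 Hlt.
  destruct (finite_collect derivable (fun m t => fact_prog t = code_prog f /\
               fact_args t = code_list (m :: xs) /\ fact_val t <> 0) n) as (ts & Hts & HQ).
  { intros m Hm; destruct (Hlt m Hm) as (k & Hk).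
    exists (code_fact f (m :: xs) (S k)); unfold code_fact.
    rewrite fact_prog_cfact, fact_args_cfact, fact_val_cfact; auto. }
  apply (derivable_by_rule (code_fact f (n :: xs) 0 :: ts)); [now constructor|].
  unfold justified; cbn [code_prog]; simpl_cpair; cbv beta iota; split; [simpl; auto|].
  intros m Hm; destruct (HQ m Hm) as (t & Ht & HQt); exists t; simpl; auto.
Qed.

Lemma eval_derivable p xs y : eval p xs y -> derivable (code_fact p xs y).
Proof.
  revert p xs y.
  apply (eval_evals_ind (fun p xs y => derivable (code_fact p xs y))
           (fun gs xs ys => forall m, m < length gs ->
                              derivable (code_fact (nth m gs PZero) xs (nth m ys 0))));
    unfold code_fact.
  - intros xs; apply (derivable_by_rule []); [constructor|].
    unfold justified; cbn [code_prog]; simpl_cpair; reflexivity.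
  - intros x xs; apply (derivable_by_rule []); [constructor|].
    unfold justified; cbn [code_prog]; simpl_cpair; cbv beta iota.
    now rewrite chd_code_list.
  - intros i xs y Hy; apply (derivable_by_rule []); [constructor|].
    unfold justified; cbn [code_prog]; simpl_cpair; cbv beta iota.
    rewrite clen_code_list, cnth_code_list; split.
    + apply nth_error_Some; congruence.
    + symmetry; now apply nth_error_nth.
  - intros f gs xs ys y Hgs IHgs _ IHf.
    apply derivable_comp with ys; auto; eapply evals_length; eauto.
  - intros f g xs y _ IHf; apply (derivable_by_rule [code_fact f xs y]); [auto|].
    unfold justified; cbn [code_prog]; simpl_cpair; cbv beta iota.
    rewrite chd_code_list, ctl_code_list; cbn [hd tl]; split; [discriminate|left; simpl; auto].
  - intros f g n xs r y _ IHr _ IHg.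
    apply (derivable_by_rule [code_fact (PPrim f g) (n :: xs) r; code_fact g (n :: r :: xs) y]);
      [auto|].
    unfold justified; cbn [code_prog]; simpl_cpair; cbv beta iota.
    rewrite chd_code_list, ctl_code_list; cbn [hd tl pred]; split; [discriminate|right].
    split; [discriminate|]; exists (code_fact (PPrim f g) (n :: xs) r); unfold code_fact.
    rewrite fact_prog_cfact, fact_args_cfact, fact_val_cfact; simpl; auto 6.
  - intros f xs n _ IH0 IHlt; apply derivable_mu; auto.
    intros m Hm; destruct (IHlt m Hm) as (k & _ & Hk); eauto.
  - intros xs m Hm; simpl in Hm; lia.
  - intros g gs xs y ys _ IHg _ IHgs [|m] Hm; auto; apply IHgs; simpl in Hm; lia.
Qed.

Definition halts (p : prog) (x : nat) : Prop := exists y, eval p [x] y.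

Lemma halts_iff_cert p x : halts p x <-> exists C, halt_certb (code_prog p) x C <> 0.
Proof.
  unfold halt_certb; split.
  - intros [y (L & HL & Hin)%eval_derivable].
    exists (code_list L); apply andn_spec; rewrite validb_spec, bex_spec, clen_code_list.
    split; auto.
    apply (In_nth _ _ 0) in Hin as (j & Hj & Hnth); exists j; split; auto.
    rewrite cnth_code_list, Hnth; unfold code_fact.
    rewrite andn_spec, fact_prog_cfact, fact_args_cfact, !eqn_spec; auto.
  - intros (C & (HC & Hj)%andn_spec).
    destruct (code_list_surj C) as [L <-].
    rewrite validb_spec in HC; rewrite bex_spec, clen_code_list in Hj.
    destruct Hj as (j & Hj & (Hp & Hx)%andn_spec); rewrite eqn_spec, cnth_code_list in Hp, Hx.
    exists (fact_val (nth j L 0)); now apply valid_trace_sound.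
Qed.

Definition zero_search (q : prog) : prog := PMu (PComp q [PProj 1]).

Lemma halts_zero_search q x : halts (zero_search q) x <-> eval q [x] 0.
Proof.
  split.
  - intros [y Hy]; inversion Hy as [| | | | | |f xs n Hz _]; subst.
    inversion Hz as [| | |f' gs xs' ys y' Hgs Hq| | |]; subst.
    inversion Hgs as [|g gs' xs'' z zs Hproj Hnil]; subst.
    inversion Hnil; inversion Hproj as [| |i xs1 y1 Hnth| | | |]; subst.
    now injection Hnth as <-.
  - intros Hq; exists 0; constructor; [|intros; lia].
    econstructor; [|exact Hq]; repeat econstructor.
Qed.

(* Diagonalisation: [zero_search q] applied to its own code halts iff it does not. *)
Lemma non_halting_not_mu_rec (Q : nat -> nat) :
  mu_rec 1 (fun ys => Q (nth 0 ys 0)) ->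
  ~ (forall e, Q e = 0 <-> ~ exists C, halt_certb e e C <> 0).
Proof.
  intros [q Hq] HQ; set (e := code_prog (zero_search q)).
  assert (Hqe : eval q [e] (Q e)) by now apply (Hq [e]).
  assert (Hhalt : halts (zero_search q) e <-> Q e = 0).
  { rewrite halts_zero_search; split; [intros H; exact (eval_det _ _ _ Hqe _ H)|intros <-; auto]. }
  rewrite halts_iff_cert, HQ in Hhalt; tauto.
Qed.

(** * The structure A *)

Lemma mu_rec_div : mu_rec 2 (fun ys => nth 0 ys 0 / nth 1 ys 0).
Proof.
  apply mu_rec_ext with (fun ys => ite (nth 1 ys 0)
    (bmin (S (nth 0 ys 0)) (fun q => ltn (nth 0 ys 0) (nth 1 ys 0 * q + nth 1 ys 0))) 0);
    [mu_rec_auto|].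
  intros ys _; set (x := nth 0 ys 0); set (k := nth 1 ys 0); clearbody x k.
  destruct k as [|k]; [reflexivity|]; cbn [ite].
  pose proof (Nat.div_mod_eq x (S k)); pose proof (Nat.mod_upper_bound x (S k)).
  apply bmin_eq.
  - pose proof (Nat.Div0.div_le_upper_bound x (S k) x); lia.
  - apply ltn_spec; lia.
  - intros m Hm%ltn_spec; apply Nat.lt_succ_r, Nat.Div0.div_lt_upper_bound; lia.
Qed.
#[export] Hint Resolve mu_rec_div : mu_rec.

Lemma mu_rec_mod : mu_rec 2 (fun ys => nth 0 ys 0 mod nth 1 ys 0).
Proof.
  apply mu_rec_ext with (fun ys => nth 0 ys 0 - nth 1 ys 0 * (nth 0 ys 0 / nth 1 ys 0));
    [mu_rec_auto|].
  intros ys _; symmetry; apply Nat.Div0.mod_eq.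
Qed.
#[export] Hint Resolve mu_rec_mod : mu_rec.

(* Replaces every [x / k] and [x mod k] by fresh variables constrained by [x = k * q + r],
   [r < k], so that [lia] can finish. *)
Ltac div_mod_elim :=
  repeat match goal with
  | |- context [?x / ?k] => let H := fresh in
      pose proof (Nat.div_mod_eq x k) as H; pose proof (Nat.mod_upper_bound x k ltac:(lia));
      generalize dependent (x / k); generalize dependent (x mod k); intros
  | H : context [?x / ?k] |- _ => revert H
  | H : context [?x mod ?k] |- _ => revert H
  | |- context [?x mod ?k] => pose proof (Nat.div_mod_eq x k); pose proof (Nat.mod_upper_bound x k ltac:(lia));
      generalize dependent (x / k); generalize dependent (x mod k); intros
  end; intros.

Lemma computable_fun_of_mu_rec f : mu_rec 1 (fun ys => f (nth 0 ys 0)) -> computable_fun f.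
Proof. intros [p Hp]; exists p; intros x; now apply (Hp [x]). Qed.

Definition charb2 (R : nat -> nat -> Prop) (x y : nat) : nat :=
  if excluded_middle_informative (R x y) then 1 else 0.

Lemma charb2_spec R x y : charb2 R x y <> 0 <-> R x y.
Proof. unfold charb2; destruct excluded_middle_informative; split; auto; lia. Qed.

Lemma mu_rec_charb2 R : computable_rel R -> mu_rec 2 (fun ys => charb2 R (nth 0 ys 0) (nth 1 ys 0)).
Proof.
  intros [p Hp]; exists p; intros [|x [|y [|]]] Hlen; try discriminate; simpl.
  unfold charb2; destruct excluded_middle_informative; now apply Hp.
Qed.

Lemma computable_set_full : computable_set (fun _ => True).
Proof. destruct (mu_rec_const 1 1) as [p Hp]; exists p; intros x; split; [intros _; now apply (Hp [x])|tauto]. Qed.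

Lemma computable_rel_of_mu_rec (R : nat -> nat -> Prop) f :
  mu_rec 2 (fun ys => f (nth 0 ys 0) (nth 1 ys 0)) ->
  (forall x y, f x y = 0 \/ f x y = 1) -> (forall x y, R x y <-> f x y <> 0) ->
  computable_rel R.
Proof.
  intros [p Hp] H01 HR; exists p; intros x y.
  pose proof (Hp [x; y] eq_refl) as Hxy; simpl in Hxy; rewrite HR.
  destruct (H01 x y) as [E|E]; rewrite E in *; split; intros H; first [exact Hxy|lia].
Qed.

(** The structure [A]: the classes are [{3k, 3k+1}] and [{3k+2}]. *)
Definition EA (x y : nat) : Prop := x / 3 = y / 3 /\ (x = y \/ (x mod 3 < 2 /\ y mod 3 < 2)).
Definition A : structure := mkStructure (fun _ => True) EA (fun _ _ _ => conj I I).

Definition EAb (x y : nat) : nat :=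
  andn (eqn (x / 3) (y / 3)) (orn (eqn x y) (andn (ltn (x mod 3) 2) (ltn (y mod 3) 2))).

Lemma EAb_spec x y : EA x y <-> EAb x y <> 0.
Proof. unfold EAb, EA; rewrite andn_spec, eqn_spec, orn_spec, eqn_spec, andn_spec, !ltn_spec; tauto. Qed.

Lemma A_computable : computable_structure A.
Proof.
  split; [apply computable_set_full|].
  apply (computable_rel_of_mu_rec _ EAb); [unfold EAb; mu_rec_auto|intros; apply andn_01|apply EAb_spec].
Qed.

Lemma EA_refl x : EA x x.
Proof. split; auto. Qed.

Lemma EA_sym x y : EA x y -> EA y x.
Proof. intros [H1 [H2|H2]]; split; auto; right; tauto. Qed.

Lemma EA_trans x y z : EA x y -> EA y z -> EA x z.
Proof.
  intros [H1 H2] [H3 H4]; split; [congruence|].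
  destruct H2 as [<-|H2]; auto; destruct H4 as [<-|H4]; auto; right; tauto.
Qed.

Lemma A_equivalence : is_equivalence_structure A.
Proof. split; [|split]; simpl; eauto using EA_refl, EA_sym, EA_trans. Qed.

Lemma EA_pair n : EA (3 * n) (3 * n + 1).
Proof. unfold EA; div_mod_elim; lia. Qed.

Lemma EA_at_most_two x y z : EA x y -> EA x z -> x <> y -> x <> z -> y <> z -> False.
Proof. unfold EA; div_mod_elim; lia. Qed.

Lemma EA_code n r m s :
  r < 3 -> s < 3 -> EA (3 * n + r) (3 * m + s) <-> n = m /\ (r = s \/ (r < 2 /\ s < 2)).
Proof.
  intros Hr Hs; unfold EA.
  replace ((3 * n + r) / 3) with n by (div_mod_elim; lia).
  replace ((3 * m + s) / 3) with m by (div_mod_elim; lia).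
  replace ((3 * n + r) mod 3) with r by (div_mod_elim; lia).
  replace ((3 * m + s) mod 3) with s by (div_mod_elim; lia).
  split; intros [-> H]; split; auto; destruct H; auto; left; lia.
Qed.

Lemma A_decompose v : exists n r, r < 3 /\ v = 3 * n + r.
Proof. exists (v / 3), (v mod 3); div_mod_elim; lia. Qed.

Fixpoint rank (P : nat -> Prop) (x : nat) : nat :=
  match x with
  | 0 => 0
  | S x => rank P x + (if excluded_middle_informative (P x) then 1 else 0)
  end.

Lemma rank_mono P x y : x <= y -> rank P x <= rank P y.
Proof. induction 1; simpl; lia. Qed.

Lemma rank_S P x : P x -> rank P (S x) = S (rank P x).
Proof. intros H; simpl; destruct (excluded_middle_informative (P x)); [lia|tauto]. Qed.

Lemma rank_inj P x y : P x -> P y -> rank P x = rank P y -> x = y.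
Proof.
  intros Hx Hy Hr; destruct (Nat.lt_trichotomy x y) as [H|[H|H]]; auto; exfalso.
  - pose proof (rank_mono P (S x) y H); rewrite rank_S in *; auto; lia.
  - pose proof (rank_mono P (S y) x H); rewrite rank_S in *; auto; lia.
Qed.

Lemma rank_surj P :
  (forall N, exists x, N <= x /\ P x) -> forall n, exists x, P x /\ rank P x = n.
Proof.
  intros Hinf.
  assert (Hunbounded : forall n, exists z, n <= rank P z).
  { induction n as [|n [z Hz]]; [now exists 0|].
    destruct (Hinf z) as [x [Hx Px]]; exists (S x); rewrite rank_S by auto.
    pose proof (rank_mono P z x Hx); lia. }
  assert (Hcross : forall n z, S n <= rank P z -> exists y, P y /\ rank P y = n).
  { intros n z; induction z as [|z IH]; simpl; intros H; [lia|].
    destruct (excluded_middle_informative (P z)); [|apply IH; lia].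
    destruct (Nat.eq_dec (rank P z) n); [now exists z|apply IH; lia]. }
  intros n; destruct (Hunbounded (S n)) as [z Hz]; eauto.
Qed.

(* Numbering the singletons and the two-element classes separately by rank gives the
   isomorphism onto [A]. *)
Section CharacterizationOfA.

Variable S : structure.
Hypothesis S_full : forall x, univ S x.
Hypothesis S_refl : forall x, E S x x.
Hypothesis S_sym : forall x y, E S x y -> E S y x.
Hypothesis S_at_most_two : forall x y z, E S x y -> E S x z -> x <> y -> x <> z -> y <> z -> False.

Definition singleton (x : nat) : Prop := forall y, E S x y -> y = x.
Definition lower (x : nat) : Prop := exists y, x < y /\ E S x y.
Definition upper (x : nat) : Prop := exists y, y < x /\ E S x y.

Hypothesis singletons_unbounded : forall N, exists x, N <= x /\ singleton x.
Hypothesis lowers_unbounded : forall N, exists x, N <= x /\ lower x.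

Definition partner (x : nat) : nat := epsilon (inhabits 0) (fun y => y < x /\ E S x y).

Lemma partner_spec x : upper x -> partner x < x /\ E S x (partner x).
Proof. apply (epsilon_spec (inhabits 0) (fun y => y < x /\ E S x y)). Qed.

Lemma partner_unique x y : y < x -> E S x y -> partner x = y.
Proof.
  intros Hy Hxy; destruct (partner_spec x) as [H1 H2]; [now exists y|].
  destruct (Nat.eq_dec (partner x) y); auto; exfalso.
  apply (S_at_most_two x (partner x) y); auto; lia.
Qed.

Lemma lower_partner x : upper x -> lower (partner x).
Proof. intros H; destruct (partner_spec x H); exists x; auto. Qed.

Lemma singleton_lower_upper x :
  (singleton x /\ ~ lower x /\ ~ upper x) \/ (lower x /\ ~ singleton x /\ ~ upper x) \/
  (upper x /\ ~ singleton x /\ ~ lower x).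
Proof.
  assert (Hsl : singleton x -> ~ lower x) by (intros Hs [y [Hy Hxy]]; apply Hs in Hxy; lia).
  assert (Hsu : singleton x -> ~ upper x) by (intros Hs [y [Hy Hxy]]; apply Hs in Hxy; lia).
  assert (Hlu : lower x -> ~ upper x).
  { intros [y [Hy Hxy]] [z [Hz Hxz]]; apply (S_at_most_two x y z); auto; lia. }
  destruct (classic (singleton x)) as [Hs|Hs]; [left; auto|].
  apply not_all_ex_not in Hs as [y Hy]; apply imply_to_and in Hy as [Hxy Hne].
  destruct (Nat.lt_trichotomy x y) as [H|[H|H]]; [|congruence|].
  - assert (lower x) by (exists y; auto); right; left; intuition.
  - assert (upper x) by (exists y; auto); right; right; intuition.
Qed.

Definition to_A (x : nat) : nat :=
  if excluded_middle_informative (singleton x) then 3 * rank singleton x + 2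
  else if excluded_middle_informative (lower x) then 3 * rank lower x + 0
  else 3 * rank lower (partner x) + 1.

Lemma to_A_cases x :
  (singleton x /\ to_A x = 3 * rank singleton x + 2) \/
  (lower x /\ to_A x = 3 * rank lower x + 0) \/
  (upper x /\ to_A x = 3 * rank lower (partner x) + 1).
Proof.
  unfold to_A; destruct (singleton_lower_upper x) as [(H & _)|[(H & Hs & _)|(H & Hs & Hl)]];
    repeat destruct excluded_middle_informative; tauto.
Qed.

Lemma to_A_singleton x : singleton x -> to_A x = 3 * rank singleton x + 2.
Proof.
  intros Hx; pose proof (singleton_lower_upper x) as Hexcl.
  destruct (to_A_cases x) as [(H & E)|[(H & E)|(H & E)]]; auto; tauto.
Qed.

Lemma to_A_lower x : lower x -> to_A x = 3 * rank lower x + 0.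
Proof.
  intros Hx; pose proof (singleton_lower_upper x) as Hexcl.
  destruct (to_A_cases x) as [(H & E)|[(H & E)|(H & E)]]; auto; tauto.
Qed.

Lemma to_A_upper x : upper x -> to_A x = 3 * rank lower (partner x) + 1.
Proof.
  intros Hx; pose proof (singleton_lower_upper x) as Hexcl.
  destruct (to_A_cases x) as [(H & E)|[(H & E)|(H & E)]]; auto; tauto.
Qed.

Lemma to_A_inj x y : to_A x = to_A y -> x = y.
Proof.
  intros Hxy; destruct (to_A_cases x) as [(Hx & Ex)|[(Hx & Ex)|(Hx & Ex)]];
    destruct (to_A_cases y) as [(Hy & Ey)|[(Hy & Ey)|(Hy & Ey)]]; try lia.
  - apply (rank_inj singleton); auto; lia.
  - apply (rank_inj lower); auto; lia.
  - assert (Hp : partner x = partner y) by (apply (rank_inj lower); auto using lower_partner; lia).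
    destruct (partner_spec x Hx), (partner_spec y Hy), (Nat.eq_dec x y) as [|Hne]; auto.
    exfalso; apply (S_at_most_two (partner x) x y); auto; try lia; rewrite Hp; auto.
Qed.

Lemma to_A_EA x y : E S x y <-> EA (to_A x) (to_A y).
Proof.
  destruct (Nat.eq_dec x y) as [<-|Hne]; [split; auto using EA_refl|].
  assert (Hpair : forall x y, x < y -> E S x y -> EA (to_A x) (to_A y)).
  { clear x y Hne; intros x y Hlt Hxy.
    destruct (to_A_cases x) as [(Hx & _)|[(_ & Ex)|(Hx & _)]].
    - apply Hx in Hxy; lia.
    - destruct (to_A_cases y) as [(Hy & _)|[(Hy & _)|(Hy & Ey)]].
      + apply S_sym, Hy in Hxy; lia.
      + exfalso; destruct Hy as [z [Hz Hyz]]; apply (S_at_most_two y x z); auto; lia.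
      + rewrite Ex, Ey, (partner_unique y x); auto; apply EA_code; lia.
    - exfalso; destruct Hx as [z [Hz Hxz]]; apply (S_at_most_two x y z); auto; lia. }
  split.
  - intros Hxy; assert (x < y \/ y < x) as [H|H] by lia; [now apply Hpair|].
    apply EA_sym, Hpair; auto.
  - intros HE; destruct (to_A_cases x) as [(Hx & Ex)|[(Hx & Ex)|(Hx & Ex)]];
      destruct (to_A_cases y) as [(Hy & Ey)|[(Hy & Ey)|(Hy & Ey)]];
      rewrite Ex, Ey in HE; apply EA_code in HE; try lia;
      try (exfalso; apply Hne, to_A_inj; lia).
    + replace x with (partner y) by (apply (rank_inj lower); auto using lower_partner; lia).
      apply S_sym, partner_spec; auto.
    + replace y with (partner x) by (apply (rank_inj lower); auto using lower_partner; lia).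
      apply partner_spec; auto.
Qed.

Lemma isomorphic_A : isomorphic S A.
Proof.
  exists to_A; split; [split; [|split]|].
  - intros; exact I.
  - intros x y _ _; apply to_A_inj.
  - intros x y _ _; apply to_A_EA.
  - intros v _; destruct (A_decompose v) as (n & r & Hr & ->).
    destruct (rank_surj lower lowers_unbounded n) as [x [Hx <-]].
    destruct r as [|[|[|r]]]; [| | |lia].
    + exists x; split; auto; now apply to_A_lower.
    + destruct Hx as [y [Hy Hxy]].
      exists y; split; auto; rewrite to_A_upper by (exists x; auto).
      rewrite (partner_unique y x); auto.
    + destruct (rank_surj singleton singletons_unbounded (rank lower x)) as [z [Hz Hzn]].
      exists z; split; auto; rewrite to_A_singleton; auto; lia.
Qed.

End CharacterizationOfA.

(** * A is not computably categorical *)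

Definition min_cert (e k : nat) : Prop :=
  cfst k = e /\ halt_certb e e (csnd k) <> 0 /\ forall c, c < csnd k -> halt_certb e e c = 0.

Definition min_certb (e k : nat) : nat :=
  andn (eqn (cfst k) e)
       (andn (halt_certb e e (csnd k)) (ball (csnd k) (fun c => notn (halt_certb e e c)))).

Lemma min_certb_spec e k : min_cert e k <-> min_certb e k <> 0.
Proof.
  unfold min_certb, min_cert; rewrite !andn_spec, eqn_spec, ball_spec.
  setoid_rewrite notn_spec; tauto.
Qed.

Lemma min_cert_unique e k k' : min_cert e k -> min_cert e k' -> k = k'.
Proof.
  intros (H1 & H2 & H3) (H1' & H2' & H3').
  assert (csnd k = csnd k') as Hc.
  { destruct (Nat.lt_trichotomy (csnd k) (csnd k')) as [H|[H|H]]; auto.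
    - now apply H3' in H.
    - now apply H3 in H. }
  rewrite <- (cpair_cfst_csnd k), <- (cpair_cfst_csnd k'); congruence.
Qed.

Lemma min_cert_exists e : (exists C, halt_certb e e C <> 0) -> exists k, min_cert e k.
Proof.
  intros Hex.
  destruct (dec_inh_nat_subset_has_unique_least_element (fun C => halt_certb e e C <> 0))
    as (C & (HC & Hleast) & _); [intros C; destruct (halt_certb e e C); auto|auto|].
  exists (cpair e C); unfold min_cert; rewrite cfst_cpair, csnd_cpair; repeat split; auto.
  intros c Hc; destruct (Nat.eq_dec (halt_certb e e c) 0) as [|Hne]; auto.
  specialize (Hleast c Hne); lia.
Qed.

(* Blocks of five: [5n] and [5n+1] form a class and [5n+2] is a singleton, which makes
   infinitely many classes of each size; [5e+3] is joined to [5k+4] exactly when [k]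
   pairs [e] with its least halting certificate, so [5e+3] is a singleton iff [e] does
   not halt on [e]. *)
Definition EBhalt (x y : nat) : Prop :=
  x = y \/ (x / 5 = y / 5 /\ x mod 5 < 2 /\ y mod 5 < 2) \/
  (x mod 5 = 3 /\ y mod 5 = 4 /\ min_cert (x / 5) (y / 5)) \/
  (x mod 5 = 4 /\ y mod 5 = 3 /\ min_cert (y / 5) (x / 5)).

Definition Bhalt : structure := mkStructure (fun _ => True) EBhalt (fun _ _ _ => conj I I).

Definition EBhaltb (x y : nat) : nat :=
  orn (eqn x y)
  (orn (andn (eqn (x / 5) (y / 5)) (andn (ltn (x mod 5) 2) (ltn (y mod 5) 2)))
  (orn (andn (andn (eqn (x mod 5) 3) (eqn (y mod 5) 4)) (min_certb (x / 5) (y / 5)))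
       (andn (andn (eqn (x mod 5) 4) (eqn (y mod 5) 3)) (min_certb (y / 5) (x / 5))))).

Lemma EBhaltb_spec x y : EBhalt x y <-> EBhaltb x y <> 0.
Proof.
  unfold EBhalt, EBhaltb; rewrite !orn_spec, !andn_spec, !eqn_spec, !ltn_spec, <- !min_certb_spec.
  tauto.
Qed.

Lemma Bhalt_computable : computable_structure Bhalt.
Proof.
  split; [apply computable_set_full|].
  apply (computable_rel_of_mu_rec _ EBhaltb); [|intros; apply orn_01|apply EBhaltb_spec].
  unfold EBhaltb, min_certb; mu_rec_auto.
Qed.

Lemma EBhalt_sym x y : EBhalt x y -> EBhalt y x.
Proof.
  intros [->|[H|[H|H]]]; [left|right; left|right; right; right|right; right; left]; intuition.
Qed.

Lemma EBhalt_at_most_two x y z :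
  EBhalt x y -> EBhalt x z -> x <> y -> x <> z -> y <> z -> False.
Proof.
  intros Hxy Hxz Hne1 Hne2 Hne3.
  destruct Hxy as [|[Hxy|[(Hx & Hy & Mxy)|(Hx & Hy & Mxy)]]]; [lia| | |];
    destruct Hxz as [|[Hxz|[(Hx' & Hz & Mxz)|(Hx' & Hz & Mxz)]]]; try lia.
  - div_mod_elim; lia.
  - pose proof (min_cert_unique _ _ _ Mxy Mxz); div_mod_elim; lia.
  - destruct Mxy as [H1 _], Mxz as [H2 _]; assert (y / 5 = z / 5) by congruence.
    clear H1 H2; div_mod_elim; lia.
Qed.

Lemma Bhalt_isomorphic : isomorphic Bhalt A.
Proof.
  apply isomorphic_A; simpl.
  - auto.
  - intros x; now left.
  - apply EBhalt_sym.
  - apply EBhalt_at_most_two.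
  - intros N; exists (5 * N + 2); split; [lia|].
    intros y [Hy|[Hy|[Hy|Hy]]]; auto; exfalso; div_mod_elim; lia.
  - intros N; exists (5 * N); split; [lia|]; exists (5 * N + 1); split; [lia|].
    right; left; div_mod_elim; lia.
Qed.

Lemma Bhalt_singleton_iff e :
  (forall y, EBhalt (5 * e + 3) y -> y = 5 * e + 3) <-> ~ exists C, halt_certb e e C <> 0.
Proof.
  assert (He : (5 * e + 3) / 5 = e) by (div_mod_elim; lia).
  split.
  - intros Hs (k & Hk)%min_cert_exists.
    enough (5 * k + 4 = 5 * e + 3) by lia; apply Hs; right; right; left.
    replace ((5 * k + 4) / 5) with k by (div_mod_elim; lia); rewrite He.
    split; [|split]; auto; div_mod_elim; lia.
  - intros Hnot y [Hy|[Hy|[(_ & _ & (Hfst & HC & _))|Hy]]]; auto; try (exfalso; div_mod_elim; lia).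
    rewrite He in HC; exfalso; eauto.
Qed.

Lemma isomorphism_A_singleton S h x :
  isomorphism S A h -> univ S x -> (forall y, E S x y -> y = x) <-> h x mod 3 = 2.
Proof.
  intros [(_ & Hinj & HE) Hsurj] Hx; cbn [univ E A] in *.
  destruct (A_decompose (h x)) as (n & r & Hr & Hhx); rewrite Hhx.
  replace ((3 * n + r) mod 3) with r by (div_mod_elim; lia).
  split.
  - intros Hs; destruct (Nat.eq_dec r 2) as [|Hne]; auto; exfalso.
    destruct (Hsurj (3 * n + (1 - r)) I) as (z & Hz & Hhz).
    assert (E S x z) as Hxz by (apply HE; auto; rewrite Hhx, Hhz; apply EA_code; lia).
    apply Hs in Hxz; subst z; lia.
  - intros -> y Hxy; destruct (E_in_univ S x y Hxy) as [_ Hy].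
    apply (HE x y Hx Hy) in Hxy as Hh; rewrite Hhx in Hh.
    destruct (A_decompose (h y)) as (m & s & Hs & Hhy); rewrite Hhy in Hh.
    apply EA_code in Hh as [-> [<-|]]; try lia; apply Hinj; auto; lia.
Qed.

Lemma A_not_computably_categorical : ~ computably_categorical A.
Proof.
  intros [_ Hcc].
  destruct (Hcc Bhalt Bhalt_computable Bhalt_isomorphic) as (h & [p Hp] & Hiso).
  assert (Hh : mu_rec 1 (fun ys => h (nth 0 ys 0))).
  { exists p; intros [|x [|]] Hlen; try discriminate; apply Hp. }
  apply (non_halting_not_mu_rec (fun e => notn (eqn (h (5 * e + 3) mod 3) 2))); [mu_rec_auto|].
  intros e; rewrite notn_eq0, eqn_spec, <- Bhalt_singleton_iff.
  symmetry; apply (isomorphism_A_singleton Bhalt); simpl; auto.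
Qed.

(** * A is computably bi-embeddably categorical *)

Lemma injective_unbounded (f : nat -> nat) :
  (forall x y, f x = f y -> x = y) -> forall N, exists k, k <= N /\ N <= f k.
Proof.
  intros Hinj N; apply NNPP; intros Hnone.
  assert (Hincl : incl (map f (seq 0 (S N))) (seq 0 N)).
  { intros u (k & <- & Hk%in_seq)%in_map_iff; apply in_seq.
    destruct (Nat.lt_ge_cases (f k) N); [lia|]; exfalso; apply Hnone; exists k; split; auto; lia. }
  apply NoDup_incl_length in Hincl; [rewrite length_map, !length_seq in Hincl; lia|].
  apply FinFun.Injective_map_NoDup; [intros x y; apply Hinj|apply seq_NoDup].
Qed.

Section BiEmbeddableWithA.

Variable B : structure.
Hypothesis B_E_computable : computable_rel (E B).
Variables g g' : nat -> nat.
Hypothesis g_emb : embedding A B g.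
Hypothesis g'_emb : embedding B A g'.


Lemma mu_rec_EB : mu_rec 2 (fun ys => charb2 (E B) (nth 0 ys 0) (nth 1 ys 0)).
Proof. now apply mu_rec_charb2. Qed.
#[local] Hint Resolve mu_rec_EB : mu_rec.

Lemma B_E_EA x y : univ B x -> univ B y -> E B x y <-> EA (g' x) (g' y).
Proof. destruct g'_emb as (_ & _ & H); apply H. Qed.

Lemma B_refl x : univ B x -> E B x x.
Proof. intros Hx; apply B_E_EA, EA_refl; auto. Qed.

Lemma B_sym x y : E B x y -> E B y x.
Proof.
  intros Hxy; destruct (E_in_univ B x y Hxy).
  apply B_E_EA, EA_sym, B_E_EA; auto.
Qed.

Lemma B_trans x y z : E B x y -> E B y z -> E B x z.
Proof.
  intros Hxy Hyz; destruct (E_in_univ B x y Hxy), (E_in_univ B y z Hyz).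
  apply B_E_EA; auto; apply EA_trans with (g' y); apply B_E_EA; auto.
Qed.

Lemma B_at_most_two x y z : E B x y -> E B x z -> x <> y -> x <> z -> y <> z -> False.
Proof.
  intros Hxy Hxz Hne1 Hne2 Hne3; destruct (E_in_univ B x y Hxy), (E_in_univ B x z Hxz).
  destruct g'_emb as (_ & Hinj & _).
  apply (EA_at_most_two (g' x) (g' y) (g' z)); try (apply B_E_EA; auto);
    intros Heq; apply Hinj in Heq; auto.
Qed.

Definition least_partner (x : nat) : nat := bmin x (fun y => charb2 (E B) y x).

Definition emb_BA (x : nat) : nat :=
  ite (ltn (least_partner x) x) (3 * least_partner x + 1) (3 * x).

Lemma mu_rec_emb_BA : mu_rec 1 (fun ys => emb_BA (nth 0 ys 0)).
Proof. unfold emb_BA, least_partner; mu_rec_auto. Qed.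

Lemma emb_BA_cases x :
  (emb_BA x = 3 * x + 0 /\ forall y, y < x -> ~ E B y x) \/
  (emb_BA x = 3 * least_partner x + 1 /\ least_partner x < x /\ E B (least_partner x) x).
Proof.
  unfold emb_BA; destruct (ltn (least_partner x) x) eqn:Hlt; cbn [ite].
  - left; split; [lia|]; intros y Hy Hyx.
    pose proof (bmin_least x (fun y => charb2 (E B) y x) y Hy (proj2 (charb2_spec _ _ _) Hyx)).
    enough (least_partner x < x) by (apply ltn_spec in H0; lia); unfold least_partner; lia.
  - assert (Hl : least_partner x < x) by (apply ltn_spec; lia).
    right; split; auto; split; auto; apply charb2_spec, (bmin_found x (fun y => charb2 (E B) y x) Hl).
Qed.

Lemma emb_BA_pair x y : x < y -> E B x y -> emb_BA x = 3 * x + 0 /\ emb_BA y = 3 * x + 1.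
Proof.
  intros Hlt Hxy.
  destruct (emb_BA_cases y) as [(_ & Hnone)|(Hy & Hlp & Hlpy)]; [now apply Hnone in Hxy|].
  assert (least_partner y = x) as Hpy.
  { destruct (Nat.eq_dec (least_partner y) x); auto; exfalso.
    apply (B_at_most_two y (least_partner y) x); auto using B_sym; lia. }
  destruct (emb_BA_cases x) as [(Hx & _)|(_ & Hlp' & Hlpx)]; [rewrite Hy, Hpy; auto|].
  exfalso; apply (B_at_most_two x (least_partner x) y); auto using B_sym; lia.
Qed.

Lemma emb_BA_inj x y : emb_BA x = emb_BA y -> x = y.
Proof.
  intros Heq; destruct (emb_BA_cases x) as [(Hx & _)|(Hx & Hlx & Ex)];
    destruct (emb_BA_cases y) as [(Hy & _)|(Hy & Hly & Ey)]; try lia.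
  assert (least_partner x = least_partner y) as Hp by lia.
  destruct (Nat.eq_dec x y) as [|Hne]; auto; exfalso.
  apply (B_at_most_two (least_partner x) x y); auto; try lia; now rewrite Hp.
Qed.

Lemma emb_BA_E x y : univ B x -> univ B y -> E B x y <-> EA (emb_BA x) (emb_BA y).
Proof.
  intros Hx Hy; destruct (Nat.eq_dec x y) as [<-|Hne]; [split; auto using EA_refl, B_refl|].
  split.
  - intros Hxy; assert (x < y \/ y < x) as [Hlt|Hlt] by lia.
    + destruct (emb_BA_pair x y Hlt Hxy) as [-> ->]; apply EA_code; lia.
    + destruct (emb_BA_pair y x Hlt (B_sym _ _ Hxy)) as [-> ->]; apply EA_code; lia.
  - intros HE; destruct (emb_BA_cases x) as [(Ex & _)|(Ex & _ & Hpx)];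
      destruct (emb_BA_cases y) as [(Ey & _)|(Ey & _ & Hpy)];
      rewrite Ex, Ey in HE; apply EA_code in HE; try lia.
    + now replace x with (least_partner y) by lia.
    + apply B_sym; now replace y with (least_partner x) by lia.
    + exfalso; apply Hne, emb_BA_inj; lia.
Qed.

Lemma emb_BA_embedding : embedding B A emb_BA.
Proof. split; [|split]; intros; [exact I|now apply emb_BA_inj|now apply emb_BA_E]. Qed.

Definition upperb (b : nat) : nat := bex b (fun a => charb2 (E B) a b).

Lemma upperb_spec b : upperb b <> 0 <-> exists a, a < b /\ E B a b.
Proof. unfold upperb; rewrite bex_spec; now setoid_rewrite charb2_spec. Qed.

Lemma uppers_unbounded c : exists b, c <= b /\ upperb b <> 0.
Proof.
  destruct g_emb as (Hgu & Hgi & HgE).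
  destruct (injective_unbounded (fun k => g (3 * k))) with (N := c) as (k & _ & Hk).
  { intros x y H; apply Hgi in H; simpl; auto; lia. }
  assert (E B (g (3 * k)) (g (3 * k + 1))) as Hg by (apply HgE; simpl; auto; apply EA_pair).
  assert (g (3 * k) <> g (3 * k + 1)) as Hne by (intros H; apply Hgi in H; simpl; auto; lia).
  assert (g (3 * k) < g (3 * k + 1) \/ g (3 * k + 1) < g (3 * k)) as [Hlt|Hlt] by lia.
  - exists (g (3 * k + 1)); split; [lia|]; apply upperb_spec; eauto.
  - exists (g (3 * k)); split; [lia|]; apply upperb_spec; eauto using B_sym.
Qed.

Definition upper_gap (c : nat) : nat :=
  epsilon (inhabits 0) (fun d => upperb (c + d) <> 0 /\ forall d', d' < d -> upperb (c + d') = 0).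

Lemma upper_gap_spec c :
  upperb (c + upper_gap c) <> 0 /\ forall d', d' < upper_gap c -> upperb (c + d') = 0.
Proof.
  apply (epsilon_spec (inhabits 0)
           (fun d => upperb (c + d) <> 0 /\ forall d', d' < d -> upperb (c + d') = 0)).
  destruct (dec_inh_nat_subset_has_unique_least_element (fun d => upperb (c + d) <> 0))
    as (d & (Hd & Hleast) & _); [intros d; destruct (upperb (c + d)); auto| |].
  - destruct (uppers_unbounded c) as (b & Hcb & Hb); exists (b - c).
    now replace (c + (b - c)) with b by lia.
  - exists d; split; auto; intros d' Hd'.
    destruct (Nat.eq_dec (upperb (c + d')) 0) as [|Hne]; auto; specialize (Hleast d' Hne); lia.
Qed.

Lemma mu_rec_upper_gap : mu_rec 1 (fun ys => upper_gap (nth 0 ys 0)).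
Proof.
  apply (mu_rec_mu 1 (fun ys => notn (upperb (nth 1 ys 0 + nth 0 ys 0)))); [unfold upperb; mu_rec_auto|].
  intros xs _; destruct (upper_gap_spec (nth 0 xs 0)) as [Hd Hbelow]; simpl; split.
  - now apply notn_eq0.
  - intros j Hj; apply notn_spec, Hbelow; lia.
Qed.
#[local] Hint Resolve mu_rec_upper_gap : mu_rec.

(** [top n] is the [n]-th element of [upperb] and [bot n] its partner. *)
Fixpoint top (n : nat) : nat :=
  match n with 0 => upper_gap 0 | S n => S (top n) + upper_gap (S (top n)) end.

Definition bot (n : nat) : nat := bmin (top n) (fun a => charb2 (E B) a (top n)).

Lemma mu_rec_top : mu_rec 1 (fun ys => top (nth 0 ys 0)).
Proof.
  apply (mu_rec_prim 0 (fun _ => upper_gap 0) (fun ys => S (nth 1 ys 0) + upper_gap (S (nth 1 ys 0))));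
    [apply mu_rec_const|mu_rec_auto|reflexivity|reflexivity].
Qed.
#[local] Hint Resolve mu_rec_top : mu_rec.

Lemma mu_rec_bot : mu_rec 1 (fun ys => bot (nth 0 ys 0)).
Proof. unfold bot; mu_rec_auto. Qed.
#[local] Hint Resolve mu_rec_bot : mu_rec.

Lemma top_upper n : upperb (top n) <> 0.
Proof. destruct n; [exact (proj1 (upper_gap_spec 0))|exact (proj1 (upper_gap_spec _))]. Qed.

Lemma top_inj n m : top n = top m -> n = m.
Proof.
  assert (Hmono : forall n m, n < m -> top n < top m) by (induction 1; simpl; lia).
  intros H; destruct (Nat.lt_trichotomy n m) as [Hl|[Hl|Hl]]; auto; apply Hmono in Hl; lia.
Qed.

Lemma bot_spec n : bot n < top n /\ E B (bot n) (top n).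
Proof.
  destruct (proj1 (upperb_spec _) (top_upper n)) as (a & Ha & Hab).
  assert (Hlt : bot n < top n).
  { pose proof (bmin_least (top n) (fun a => charb2 (E B) a (top n)) a Ha (proj2 (charb2_spec _ _ _) Hab)).
    unfold bot; lia. }
  split; auto; apply charb2_spec, (bmin_found _ _ Hlt).
Qed.

Lemma class_of_top n w : E B w (top n) -> w = bot n \/ w = top n.
Proof.
  intros Hw; destruct (bot_spec n) as [Hlt Hbt].
  destruct (Nat.eq_dec w (bot n)); auto; destruct (Nat.eq_dec w (top n)); auto; exfalso.
  apply (B_at_most_two (top n) (bot n) w); auto using B_sym; lia.
Qed.

Lemma E_top n u : u = bot n \/ u = top n -> E B u (top n).
Proof.
  destruct (bot_spec n) as [_ Hbt]; intros [->| ->]; auto.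
  apply B_refl, (E_in_univ B _ _ Hbt).
Qed.

Lemma pairs_disjoint n m u v :
  (u = bot n \/ u = top n) -> (v = bot m \/ v = top m) -> E B u v -> n = m.
Proof.
  intros Hu%E_top Hv%E_top Huv.
  assert (E B (top m) (top n)) as Hmn by eauto using B_trans, B_sym.
  destruct (class_of_top n _ Hmn) as [Hb|Ht], (class_of_top m _ (B_sym _ _ Hmn)) as [Hb'|Ht'];
    try (now apply top_inj); destruct (bot_spec n), (bot_spec m); lia.
Qed.

(* [3k] and [3k+1] go to the pair number [2k], and [3k+2] to the top of the pair [2k+1]. *)
Definition emb_AB (v : nat) : nat :=
  ite (eqn (v mod 3) 0) (bot (2 * (v / 3)))
    (ite (eqn (v mod 3) 1) (top (2 * (v / 3))) (top (2 * (v / 3) + 1))).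

Lemma mu_rec_emb_AB : mu_rec 1 (fun ys => emb_AB (nth 0 ys 0)).
Proof. unfold emb_AB; mu_rec_auto. Qed.

Lemma emb_AB_code k r :
  r < 3 ->
  (r = 0 /\ emb_AB (3 * k + r) = bot (2 * k)) \/ (r = 1 /\ emb_AB (3 * k + r) = top (2 * k)) \/
  (r = 2 /\ emb_AB (3 * k + r) = top (2 * k + 1)).
Proof.
  intros Hr; unfold emb_AB.
  replace ((3 * k + r) / 3) with k by (div_mod_elim; lia).
  replace ((3 * k + r) mod 3) with r by (div_mod_elim; lia).
  destruct r as [|[|[|r]]]; cbn; auto; lia.
Qed.

Ltac emb_AB_cases k r :=
  let Hr := fresh in let E := fresh "E" in
  destruct (emb_AB_code k r ltac:(lia)) as [(Hr & E)|[(Hr & E)|(Hr & E)]]; subst r; rewrite E in *.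

Lemma emb_AB_E_code k r m s :
  r < 3 -> s < 3 -> E B (emb_AB (3 * k + r)) (emb_AB (3 * m + s)) -> k = m /\ (r < 2 <-> s < 2).
Proof.
  intros Hr Hs HE; emb_AB_cases k r; emb_AB_cases m s;
    apply (pairs_disjoint _ _ _ _ (or_introl eq_refl) (or_introl eq_refl)) in HE
    || apply (pairs_disjoint _ _ _ _ (or_introl eq_refl) (or_intror eq_refl)) in HE
    || apply (pairs_disjoint _ _ _ _ (or_intror eq_refl) (or_introl eq_refl)) in HE
    || apply (pairs_disjoint _ _ _ _ (or_intror eq_refl) (or_intror eq_refl)) in HE; lia.
Qed.

Lemma emb_AB_univ v : univ B (emb_AB v).
Proof.
  destruct (A_decompose v) as (k & r & Hr & ->); emb_AB_cases k r;
    [apply (E_in_univ B _ _ (proj2 (bot_spec _)))|apply (E_in_univ B _ _ (proj2 (bot_spec _)))..].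
Qed.

Lemma emb_AB_E v w : E B (emb_AB v) (emb_AB w) <-> EA v w.
Proof.
  destruct (A_decompose v) as (k & r & Hr & ->), (A_decompose w) as (m & s & Hs & ->).
  rewrite EA_code by auto; split.
  - intros (-> & Hrs)%emb_AB_E_code; auto; split; auto; lia.
  - intros (<- & Hrs); destruct (Nat.eq_dec r s) as [<-|Hne]; [apply B_refl, emb_AB_univ|].
    pose proof (bot_spec (2 * k)) as [_ Hbt].
    emb_AB_cases k r; emb_AB_cases k s; auto using B_sym; lia.
Qed.

Lemma emb_AB_inj v w : emb_AB v = emb_AB w -> v = w.
Proof.
  intros Heq; assert (EA v w) as HE by (apply emb_AB_E; rewrite Heq; apply B_refl, emb_AB_univ).
  destruct (A_decompose v) as (k & r & Hr & ->), (A_decompose w) as (m & s & Hs & ->).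
  apply EA_code in HE as [<- Hrs]; auto; destruct (Nat.eq_dec r s) as [<-|Hne]; auto.
  pose proof (bot_spec (2 * k)) as [Hlt _].
  emb_AB_cases k r; emb_AB_cases k s; lia.
Qed.

Lemma emb_AB_embedding : embedding A B emb_AB.
Proof.
  split; [|split]; intros; [apply emb_AB_univ|now apply emb_AB_inj|symmetry; apply emb_AB_E].
Qed.

End BiEmbeddableWithA.

Lemma A_computably_bi_embeddably_categorical : computably_bi_embeddably_categorical A.
Proof.
  split; [apply A_computable|].
  intros B [_ HE] [[g Hg] [g' Hg']]; split.
  - exists (emb_AB B); split; [apply computable_fun_of_mu_rec; eapply mu_rec_emb_AB|];
      eauto using emb_AB_embedding.
  - exists (emb_BA B); split; [apply computable_fun_of_mu_rec; eapply mu_rec_emb_BA|];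
      eauto using emb_BA_embedding.
Qed.

Theorem corollary2p7 :
  exists A : structure,
    is_equivalence_structure A /\ computable_structure A /\
    computably_bi_embeddably_categorical A /\ ~ computably_categorical A.
Proof.
  exists A; split; [apply A_equivalence|]; split; [apply A_computable|]; split.
  - apply A_computably_bi_embeddably_categorical.
  - apply A_not_computably_categorical.
Qed.
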